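(* Let $q:\mathcal{S}_0=\bigsqcup_{\lambda\in\Lambda}S_\lambda\to Z$ be a striped atlas on a striped surface $Z$. Then $q$ is equivalent to an affine striped atlas. Moreover, if every $S_\lambda$ is a model strip, then there exists a foliated homeomorphism $h:\mathcal{S}_0\to\mathcal{S}_0$ (with respect to the canonical foliations of the strips) such that $q\circ h:\mathcal{S}_0\to Z$ is an affine striped atlas.
   Context: A strip is a subset $S\subset\mathbb{R}^2$ with $\mathbb{R}\times(u,v)\subset S\subset\mathbb{R}\times[u,v]$ for some $u<v$, open in $\mathbb{R}\times[u,v]$; $\partial_-S=S\cap(\mathbb{R}\times\{u\})$, $\partial_+S=S\cap(\mathbb{R}\times\{v\})$, $\partial S=\partial_-S\cup\partial_+S$, whose connected components (open horizontal intervals) are the boundary intervals. A model strip is a strip whose boundary intervals are bounded and have mutually disjoint closures in $\mathbb{R}\times[u,v]$. The canonical foliation of a strip consists of the lines $\mathbb{R}\times\{t\}$, $t\in(u,v)$, and the boundary intervals; a foliated homeomorphism maps leaves onto leaves. A striped atlas on a two-dimensional topological manifold $Z$ is a map $q:\mathcal{S}_0\to Z$ where $\mathcal{S}_0=\bigsqcup_{\lambda\in\Lambda}S_\lambda$ is a disjoint union of at most countably many strips, $q$ is a quotient map (continuous, surjective, and $U\subset Z$ is open iff $q^{-1}(U)\cap S_\lambda$ is open in $S_\lambda$ for every $\lambda$), and there are two families $\{X_\gamma\}_{\gamma\in\Gamma}$, $\{Y_\gamma\}_{\gamma\in\Gamma}$ of boundary intervals of strips of $\mathcal{S}_0$, all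 of them mutually distinct (hence disjoint), such that $q$ is injective on the complement of $\bigcup_\gamma(X_\gamma\cup Y_\gamma)$, $q(X_\gamma)=q(Y_\gamma)$, and $q|_{X_\gamma}$, $q|_{Y_\gamma}$ are embeddings with closed images. A surface admitting a striped atlas is a striped surface. Gluing maps: $\phi_\gamma=(q|_{X_\gamma})^{-1}\circ q|_{Y_\gamma}:Y_\gamma\to X_\gamma$; writing $X_\gamma=(a,b)\times\{x_\gamma\}$, $Y_\gamma=(c,d)\times\{y_\gamma\}$, one has $\phi_\gamma(s,y_\gamma)=(\psi_\gamma(s),x_\gamma)$ for a homeomorphism $\psi_\gamma:(c,d)\to(a,b)$. The atlas is affine if all $S_\lambda$ are model strips and every $\psi_\gamma$ is affine, i.e. equals $t\mapsto\frac{b-a}{d-c}(t-c)+a$ or $t\mapsto\frac{a-b}{d-c}(t-c)+b$. Two striped atlases $q:\mathcal{S}_0\to Z$, $q':\mathcal{S}'_0\to Z'$ are equivalent if there are foliated homeomorphisms $h:\mathcal{S}_0\to\mathcal{S}'_0$ (canonical foliations of strips) and $k:Z\to Z'$ (canonical foliations of $Z$, $Z'$, whose leaves are the $q$-images of leaves of the strips) with $q'\circ h=k\circ q$. *)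

From Stdlib Require Import Reals.
Open Scope R_scope.

Definition is_topology {T : Type} (opn : (T -> Prop) -> Prop) : Prop :=
  opn (fun _ => True) /\ opn (fun _ => False) /\
  (forall U V, opn U -> opn V -> opn (fun x => U x /\ V x)) /\
  (forall F : (T -> Prop) -> Prop, (forall U, F U -> opn U) ->
     opn (fun x => exists U, F U /\ U x)).

Definition sub_open {T : Type} (opn : (T -> Prop) -> Prop) (A W : T -> Prop) : Prop :=
  exists U, opn U /\ forall x, A x -> (W x <-> U x).

Definition continuous_on {T T' : Type} (opn : (T -> Prop) -> Prop) (A : T -> Prop)
  (opn' : (T' -> Prop) -> Prop) (B : T' -> Prop) (f : T -> T') : Prop :=
  (forall x, A x -> B (f x)) /\
  (forall V, opn' V -> sub_open opn A (fun x => V (f x))).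

Definition homeo_on {T T' : Type} (opn : (T -> Prop) -> Prop) (A : T -> Prop)
  (opn' : (T' -> Prop) -> Prop) (B : T' -> Prop) (f : T -> T') : Prop :=
  exists g : T' -> T,
    continuous_on opn A opn' B f /\ continuous_on opn' B opn A g /\
    (forall x, A x -> g (f x) = x) /\ (forall y, B y -> f (g y) = y).

Definition image {T T' : Type} (f : T -> T') (L : T -> Prop) : T' -> Prop :=
  fun y => exists x, L x /\ f x = y.

Definition open2 (O : R * R -> Prop) : Prop :=
  forall p, O p -> exists e, 0 < e /\
    forall p', Rabs (fst p' - fst p) < e -> Rabs (snd p' - snd p) < e -> O p'.

Definition closure2 (J : R * R -> Prop) (p : R * R) : Prop :=
  forall e, 0 < e -> exists p', J p' /\ Rabs (fst p' - fst p) < e /\ Rabs (snd p' - snd p) < e.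

(** Closed upper half-plane, model of a 2-manifold with boundary. *)
Definition halfplane (p : R * R) : Prop := 0 <= snd p.

Definition surface2 {Z : Type} (opn : (Z -> Prop) -> Prop) : Prop :=
  (forall z1 z2, z1 <> z2 -> exists U V, opn U /\ opn V /\ U z1 /\ V z2 /\
      forall z, ~ (U z /\ V z)) /\
  (forall z, exists (U : Z -> Prop) (V : R * R -> Prop) (phi : Z -> R * R),
      opn U /\ U z /\ (forall p, V p -> halfplane p) /\ sub_open open2 halfplane V /\
      homeo_on opn U open2 V phi).

Definition convex (I : R -> Prop) : Prop :=
  forall x y z, I x -> I z -> x <= y <= z -> I y.

Definition is_strip (S : R * R -> Prop) (u v : R) : Prop :=
  u < v /\
  (forall x t, u < t < v -> S (x, t)) /\
  (forall p, S p -> u <= snd p <= v) /\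
  (exists O, open2 O /\ forall p, u <= snd p <= v -> (S p <-> O p)).

(** J is a boundary interval: a connected component of ∂_-S or ∂_+S. *)
Definition boundary_interval (S : R * R -> Prop) (u v : R) (J : R * R -> Prop) : Prop :=
  exists (t : R) (I : R -> Prop),
    (t = u \/ t = v) /\ (exists x, I x) /\ convex I /\
    (forall x, I x -> S (x, t)) /\
    (forall I', convex I' -> (forall x, I x -> I' x) -> (forall x, I' x -> S (x, t)) ->
        forall x, I' x -> I x) /\
    (forall p, J p <-> (I (fst p) /\ snd p = t)).

Definition model_strip (S : R * R -> Prop) (u v : R) : Prop :=
  is_strip S u v /\
  (forall J, boundary_interval S u v J -> exists M, forall p, J p -> Rabs (fst p) <= M) /\
  (forall J1 J2, boundary_interval S u v J1 -> boundary_interval S u v J2 ->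
     ~ (forall p, J1 p <-> J2 p) -> forall p, ~ (closure2 J1 p /\ closure2 J2 p)).

Definition strip_leaf (S : R * R -> Prop) (u v : R) (L : R * R -> Prop) : Prop :=
  (exists t, u < t < v /\ forall p, L p <-> snd p = t) \/ boundary_interval S u v L.

(** * Disjoint unions of strips S_0 = ⊔_λ S_λ, points are pairs (λ, p). *)

Definition S0 {L : Type} (S : L -> R * R -> Prop) (x : L * (R * R)) : Prop :=
  S (fst x) (snd x).

(** Disjoint-union topology on L x R^2 (L discrete). *)
Definition opnP {L : Type} (U : L * (R * R) -> Prop) : Prop :=
  forall l, open2 (fun p => U (l, p)).

Definition S0_leaf {L : Type} (S : L -> R * R -> Prop) (u v : L -> R)
  (Lf : L * (R * R) -> Prop) : Prop :=
  exists l L0, strip_leaf (S l) (u l) (v l) L0 /\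
    forall x, Lf x <-> (fst x = l /\ L0 (snd x)).

Definition Z_leaf {L Z : Type} (S : L -> R * R -> Prop) (u v : L -> R)
  (q : L * (R * R) -> Z) (K : Z -> Prop) : Prop :=
  exists Lf, S0_leaf S u v Lf /\ forall z, K z <-> image q Lf z.

Definition maps_leaves {T T' : Type} (leafA : (T -> Prop) -> Prop)
  (leafB : (T' -> Prop) -> Prop) (f : T -> T') : Prop :=
  forall Lf, leafA Lf -> leafB (image f Lf).

(** A boundary interval of S_0 is a pair (λ, J). *)
Definition inB {L : Type} (b : L * (R * R -> Prop)) (x : L * (R * R)) : Prop :=
  fst x = fst b /\ snd b (snd x).

Definition same_bi {L : Type} (b1 b2 : L * (R * R -> Prop)) : Prop :=
  fst b1 = fst b2 /\ forall p, snd b1 p <-> snd b2 p.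

Definition closed_embedding {L Z : Type} (opnZ : (Z -> Prop) -> Prop)
  (q : L * (R * R) -> Z) (A : L * (R * R) -> Prop) : Prop :=
  (forall x y, A x -> A y -> q x = q y -> x = y) /\
  continuous_on opnP A opnZ (fun _ => True) q /\
  (forall W, sub_open opnP A W -> exists U, opnZ U /\
      forall z, (exists x, A x /\ W x /\ q x = z) <-> (U z /\ image q A z)) /\
  opnZ (fun z => ~ image q A z).

(** q : S_0 -> Z is a striped atlas, with gluing families X, Y indexed by G. *)
Definition striped_atlas_fam {L Z G : Type} (opnZ : (Z -> Prop) -> Prop)
  (S : L -> R * R -> Prop) (u v : L -> R) (q : L * (R * R) -> Z)
  (X Y : G -> L * (R * R -> Prop)) : Prop :=
  (exists f : L -> nat, forall l1 l2, f l1 = f l2 -> l1 = l2) /\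
  (forall l, is_strip (S l) (u l) (v l)) /\
  (forall z, exists x, S0 S x /\ q x = z) /\
  (forall U, opnZ U <-> forall l, sub_open open2 (S l) (fun p => U (q (l, p)))) /\
  (forall g, boundary_interval (S (fst (X g))) (u (fst (X g))) (v (fst (X g))) (snd (X g))) /\
  (forall g, boundary_interval (S (fst (Y g))) (u (fst (Y g))) (v (fst (Y g))) (snd (Y g))) /\
  (forall g1 g2, same_bi (X g1) (X g2) -> g1 = g2) /\
  (forall g1 g2, same_bi (Y g1) (Y g2) -> g1 = g2) /\
  (forall g1 g2, ~ same_bi (X g1) (Y g2)) /\
  (forall x y, S0 S x -> S0 S y ->
     (forall g, ~ inB (X g) x /\ ~ inB (Y g) x) ->
     (forall g, ~ inB (X g) y /\ ~ inB (Y g) y) -> q x = q y -> x = y) /\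
  (forall g z, image q (inB (X g)) z <-> image q (inB (Y g)) z) /\
  (forall g, closed_embedding opnZ q (inB (X g))) /\
  (forall g, closed_embedding opnZ q (inB (Y g))).

Definition striped_atlas {L Z : Type} (opnZ : (Z -> Prop) -> Prop)
  (S : L -> R * R -> Prop) (u v : L -> R) (q : L * (R * R) -> Z) : Prop :=
  exists (G : Type) (X Y : G -> L * (R * R -> Prop)), striped_atlas_fam opnZ S u v q X Y.

(** The gluing map psi_g : (c,d) -> (a,b) is affine:
    phi_g(s, y_g) = (psi_g s, x_g), i.e. q(psi_g s, x_g) = q(s, y_g). *)
Definition affine_gluing {L Z : Type} (q : L * (R * R) -> Z)
  (Xg Yg : L * (R * R -> Prop)) : Prop :=
  exists a b c d xg yg, a < b /\ c < d /\
    (forall p, snd Xg p <-> (a < fst p < b /\ snd p = xg)) /\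
    (forall p, snd Yg p <-> (c < fst p < d /\ snd p = yg)) /\
    ((forall s, c < s < d ->
        q (fst Xg, ((b - a) / (d - c) * (s - c) + a, xg)) = q (fst Yg, (s, yg))) \/
     (forall s, c < s < d ->
        q (fst Xg, ((a - b) / (d - c) * (s - c) + b, xg)) = q (fst Yg, (s, yg)))).

Definition affine_atlas {L Z : Type} (opnZ : (Z -> Prop) -> Prop)
  (S : L -> R * R -> Prop) (u v : L -> R) (q : L * (R * R) -> Z) : Prop :=
  (forall l, model_strip (S l) (u l) (v l)) /\
  exists (G : Type) (X Y : G -> L * (R * R -> Prop)),
    striped_atlas_fam opnZ S u v q X Y /\ forall g, affine_gluing q (X g) (Y g).

Definition atlas_equiv {L Z L' Z' : Type}
  (opnZ : (Z -> Prop) -> Prop) (S : L -> R * R -> Prop) (u v : L -> R) (q : L * (R * R) -> Z)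
  (opnZ' : (Z' -> Prop) -> Prop) (S' : L' -> R * R -> Prop) (u' v' : L' -> R)
  (q' : L' * (R * R) -> Z') : Prop :=
  exists (h : L * (R * R) -> L' * (R * R)) (k : Z -> Z'),
    homeo_on opnP (S0 S) opnP (S0 S') h /\
    maps_leaves (S0_leaf S u v) (S0_leaf S' u' v') h /\
    homeo_on opnZ (fun _ => True) opnZ' (fun _ => True) k /\
    maps_leaves (Z_leaf S u v q) (Z_leaf S' u' v' q') k /\
    (forall x, S0 S x -> q' (h x) = k (q x)).

(* Every change of charts used here is a levelwise reparametrization (x, t) |-> (F x t, t) of
   each strip, a foliated homeomorphism onto its image strip; transporting the atlas along it
   gives an equivalent striped atlas, with the identity on the surface.

   First each strip is made a model strip.  The map x |-> atan x + (t - u) (v - t) x squeezes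
   the two boundary lines into (-2, 2) and keeps every inner level a full line.  Then on each
   boundary level every component (a, b) of the boundary is shrunk affinely onto its middle
   third, by piecewise linear maps whose slopes near a and b are capped by a bound that tends to
   infinity towards that level; the boundary intervals become bounded with disjoint closures.

   On model strips every gluing map psi_g is a homeomorphism between bounded open intervals,
   hence strictly monotone, and there is an increasing map of the X_g side turning psi_g
   into the affine map with the same endpoint behaviour.  These corrections, patched together
   over the disjoint boundary intervals of each boundary level and interpolated linearly in t
   between the two boundary levels, reparametrize the strips so that all gluings are affine.
   For an atlas of model strips the second step alone gives h. *)

From Stdlib Require Import Reals Lra Classical ClassicalEpsilon FunctionalExtensionality PropExtensionality.
Open Scope R_scope.

Lemma clamp_bounds a b x : a <= b -> a <= Rmax a (Rmin b x) <= b.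
Proof. intros. unfold Rmax, Rmin. repeat destruct Rle_dec; lra. Qed.

Lemma clamp_id a b x : a <= x <= b -> Rmax a (Rmin b x) = x.
Proof. intros. unfold Rmax, Rmin. repeat destruct Rle_dec; lra. Qed.

Lemma clamp_lipschitz a b x y : a <= b -> Rabs (Rmax a (Rmin b x) - Rmax a (Rmin b y)) <= Rabs (x - y).
Proof. intros. unfold Rmax, Rmin. repeat destruct Rle_dec; unfold Rabs; repeat destruct Rcase_abs; lra. Qed.

Definition continuous_within (P : R -> Prop) (f : R -> R) : Prop :=
  forall x, P x -> forall e, 0 < e -> exists d, 0 < d /\
    forall x', P x' -> Rabs (x' - x) < d -> Rabs (f x' - f x) < e.

Lemma IVT_interval (f : R -> R) a b y : a < b -> continuous_within (fun x => a <= x <= b) f ->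
  f a < y < f b -> exists x, a <= x <= b /\ f x = y.
Proof.
  intros Hab Hc Hy.
  set (g := fun x => f (Rmax a (Rmin b x)) - y).
  assert (Hg : forall x, continuity_pt g x).
  { intros x0 e He. simpl.
    destruct (Hc (Rmax a (Rmin b x0)) (clamp_bounds a b x0 ltac:(lra)) e He) as [d [Hd Hd']].
    exists d. split; [lra|]. intros x [_ Hx]. unfold R_dist in *. unfold g.
    replace (f (Rmax a (Rmin b x)) - y - (f (Rmax a (Rmin b x0)) - y)) with
      (f (Rmax a (Rmin b x)) - f (Rmax a (Rmin b x0))) by ring.
    apply Hd'. apply clamp_bounds; lra.
    eapply Rle_lt_trans. apply clamp_lipschitz. lra. exact Hx. }
  destruct (IVT g a b (fun x => Hg x) Hab) as [z [Hz Hz']].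
  - unfold g. rewrite clamp_id by lra. lra.
  - unfold g. rewrite clamp_id by lra. lra.
  - exists z. split; auto. unfold g in Hz'. rewrite clamp_id in Hz' by lra. lra.
Qed.

(** * Levelwise homeomorphisms of strips *)

Definition continuous2_on (S : R*R -> Prop) (F : R -> R -> R) : Prop :=
  forall x t, S (x,t) -> forall e, 0 < e -> exists d, 0 < d /\ forall x' t', S (x',t') ->
    Rabs (x' - x) < d -> Rabs (t' - t) < d -> Rabs (F x' t' - F x t) < e.

(* Then [(x, t) |-> (F x t, t)] is a foliated homeomorphism from [S] onto [level_image S F]. *)
Definition level_homeo (S : R*R -> Prop) (u v : R) (F : R -> R -> R) : Prop :=
  is_strip S u v /\ continuous2_on S F /\
  (forall x y t, S (x,t) -> S (y,t) -> x < y -> F x t < F y t) /\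
  (forall t, u < t < v -> forall y, exists x, F x t = y).

Definition level_image (S : R*R -> Prop) (F : R -> R -> R) (p : R*R) : Prop :=
  exists x, S (x, snd p) /\ F x (snd p) = fst p.

Definition level_inv (S : R*R -> Prop) (F : R -> R -> R) (y t : R) : R :=
  epsilon (inhabits 0) (fun x => S (x,t) /\ F x t = y).

Lemma level_inv_spec S F y t : level_image S F (y,t) -> S (level_inv S F y t, t) /\ F (level_inv S F y t) t = y.
Proof. intros [x Hx]. unfold level_inv. apply (epsilon_spec (inhabits 0) (fun x => S (x,t) /\ F x t = y)).
  exists x. exact Hx. Qed.

Lemma level_homeo_inj S u v F x y t : level_homeo S u v F -> S (x,t) -> S (y,t) -> F x t = F y t -> x = y.
Proof. intros [_ [_ [Hm _]]] Hx Hy E.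
  destruct (Rtotal_order x y) as [H|[H|H]]; auto.
  - specialize (Hm _ _ _ Hx Hy H). lra.
  - specialize (Hm _ _ _ Hy Hx H). lra.
Qed.

Lemma level_invK S u v F x t : level_homeo S u v F -> S (x,t) -> level_inv S F (F x t) t = x.
Proof. intros G Hx. destruct (level_inv_spec S F (F x t) t) as [H1 H2].
  - exists x. simpl. auto.
  - eapply level_homeo_inj; eauto.
Qed.

Lemma Rabs_sub_diag_lt a r : 0 < r -> Rabs (a - a) < r.
Proof. intros. replace (a-a) with 0 by ring. rewrite Rabs_R0. auto. Qed.

Lemma strip_nbhd S u v x t : is_strip S u v -> S (x,t) ->
  exists r, 0 < r /\ forall x' t', Rabs (x'-x) < r -> Rabs (t'-t) < r -> u <= t' <= v -> S (x',t').
Proof. intros [_ [_ [Hb [O [HO HSO]]]]] Hx.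
  specialize (Hb _ Hx) as Hb'. simpl in Hb'.
  assert (HOx : O (x,t)) by (apply HSO; auto).
  destruct (HO _ HOx) as [e [He He']].
  exists e. split; auto. intros x' t' H1 H2 H3.
  apply HSO; simpl; auto.
Qed.

Lemma strip_level_bounds S u v x t : is_strip S u v -> S (x,t) -> u <= t <= v.
Proof. intros [_ [_ [Hb _]]] Hx. exact (Hb _ Hx). Qed.

Lemma strip_level_nbhd S u v x t : is_strip S u v -> S (x,t) ->
  exists r, 0 < r /\ forall x', Rabs (x'-x) < r -> S (x',t).
Proof. intros Hs Hx. destruct (strip_nbhd S u v x t Hs Hx) as [r [Hr H]].
  exists r. split; auto. intros. apply H; auto. apply Rabs_sub_diag_lt; auto.
  eapply strip_level_bounds; eauto. Qed.

Lemma level_homeo_IVT S u v F a b y t : level_homeo S u v F -> a < b -> (forall z, a <= z <= b -> S (z,t)) ->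
  F a t < y < F b t -> exists z, a <= z <= b /\ F z t = y.
Proof. intros G Hab HS Hy.
  apply (IVT_interval (fun z => F z t) a b y Hab); auto.
  intros x Hx e He. destruct G as [_ [Hc _]].
  destruct (Hc x t (HS x Hx) e He) as [d [Hd Hd']].
  exists d. split; auto. intros x' Hx' Hxx. apply Hd'; auto.
  apply Rabs_sub_diag_lt; auto.
Qed.

Lemma level_image_nbhd_boundary S u v F x y t : level_homeo S u v F -> S (x,t) ->
  F x t = y -> (t = u \/ t = v) ->
  exists r, 0 < r /\ forall p', Rabs (fst p' - y) < r -> Rabs (snd p' - t) < r ->
     u <= snd p' <= v -> level_image S F p'.
Proof. intros G Hx Hy Ht. pose proof G as [Hs [Hc [Hm Hsu]]]. pose proof Hs as [Huv [Hint [Hb Ho]]].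
  destruct (strip_nbhd S u v x t Hs Hx) as [r0 [Hr0 Hbox]].
  assert (Htb : u <= t <= v) by (eapply strip_level_bounds; eauto).
  assert (HS : forall z, x - r0/2 <= z <= x + r0/2 -> S (z,t)).
  { intros z Hz. apply Hbox; auto. unfold Rabs; destruct Rcase_abs; lra. apply Rabs_sub_diag_lt; auto. }
  assert (Ha : F (x - r0/2) t < y). { subst y. apply Hm; auto. apply HS; lra. lra. }
  assert (Hbb : y < F (x + r0/2) t). { subst y. apply Hm; auto. apply HS; lra. lra. }
  exists (Rmin (Rmin (y - F (x - r0/2) t) (F (x + r0/2) t - y)) (v-u)). split.
  { repeat apply Rmin_pos; lra. }
  intros [y' t'] H1 H2 H3. simpl in *.
  assert (Hm1 : Rmin (Rmin (y - F (x - r0/2) t) (F (x + r0/2) t - y)) (v-u) <= y - F (x - r0/2) t).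
  { eapply Rle_trans. apply Rmin_l. apply Rmin_l. }
  assert (Hm2 : Rmin (Rmin (y - F (x - r0/2) t) (F (x + r0/2) t - y)) (v-u) <= F (x + r0/2) t - y).
  { eapply Rle_trans. apply Rmin_l. apply Rmin_r. }
  assert (Hm3 : Rmin (Rmin (y - F (x - r0/2) t) (F (x + r0/2) t - y)) (v-u) <= v - u) by apply Rmin_r.
  destruct (Req_dec t' t) as [E|E].
  - subst t'. destruct (level_homeo_IVT S u v F (x - r0/2) (x + r0/2) y' t G ltac:(lra) HS) as [z [Hz Hz']].
    { revert H1. unfold Rabs; destruct Rcase_abs; lra. }
    exists z. simpl. split; auto.
  - assert (u < t' < v). { revert H2. unfold Rabs; destruct Rcase_abs; destruct Ht; lra. }
    destruct (Hsu t' H y') as [x' Hx']. exists x'. simpl. split; auto.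
Qed.

Lemma level_image_strip S u v F : level_homeo S u v F -> is_strip (level_image S F) u v.
Proof. intros G. pose proof G as [Hs [Hc [Hm Hsu]]]. pose proof Hs as [Huv [Hint [Hb Ho]]].
  split; [auto|]. split.
  { intros y t Ht. destruct (Hsu t Ht y) as [x Hx]. exists x. simpl. auto. }
  split.
  { intros [y t] [x [Hx _]]. simpl in *. exact (Hb _ Hx). }
  exists (fun p => exists r, 0 < r /\ forall p', Rabs (fst p' - fst p) < r -> Rabs (snd p' - snd p) < r ->
     u <= snd p' <= v -> level_image S F p').
  split.
  { intros p [r [Hr H]]. exists (r/2). split; [lra|]. intros p' H1 H2.
    exists (r/2). split; [lra|]. intros p'' H3 H4 H5. apply H; auto.
    - replace (fst p'' - fst p) with ((fst p'' - fst p') + (fst p' - fst p)) by ring.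
      eapply Rle_lt_trans. apply Rabs_triang. lra.
    - replace (snd p'' - snd p) with ((snd p'' - snd p') + (snd p' - snd p)) by ring.
      eapply Rle_lt_trans. apply Rabs_triang. lra. }
  intros [y t] Hut. simpl in Hut. split.
  2:{ intros [r [Hr H]]. apply H; simpl; auto; apply Rabs_sub_diag_lt; auto. }
  intros [x [Hx Hy]]. simpl in Hx, Hy.
  destruct (Rlt_dec u t) as [Hut1|Hut1]; [destruct (Rlt_dec t v) as [Htv|Htv]|].
  - exists (Rmin (t-u) (v-t)). split. apply Rmin_pos; lra.
    intros [y' t'] H1 H2 H3. simpl in *.
    assert (u < t' < v). { revert H2. unfold Rmin. destruct Rle_dec; unfold Rabs; destruct Rcase_abs; lra. }
    destruct (Hsu t' H y') as [x' Hx']. exists x'. simpl. split; auto.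
  - assert (Ht : t = v) by lra. eapply level_image_nbhd_boundary; eauto.
  - assert (Ht : t = u) by lra. eapply level_image_nbhd_boundary; eauto.
Qed.

Lemma level_homeo_reflect_lt S u v F x y t : level_homeo S u v F -> S (x,t) ->
  S (y,t) -> F x t < F y t -> x < y.
Proof. intros G Hx Hy H. destruct (Rtotal_order x y) as [E|[E|E]]; auto.
  - subst. lra.
  - pose proof (proj1 (proj2 (proj2 G)) _ _ _ Hy Hx E). lra. Qed.

Lemma level_image_inv_iff S u v F p : level_homeo S u v F ->
  (level_image (level_image S F) (level_inv S F) p <-> S p).
Proof. intros G. destruct p as [x t]. split.
  - intros [y [Hy E]]. simpl in *. destruct (level_inv_spec S F y t Hy) as [H1 H2]. rewrite E in H1. auto.
  - intros Hx. exists (F x t). simpl. split.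
    + exists x. simpl. auto.
    + eapply level_invK; eauto.
Qed.

Lemma level_inv_continuous S u v F : level_homeo S u v F -> continuous2_on (level_image S F) (level_inv S F).
Proof. intros G. pose proof G as [Hs [Hc [Hm Hsu]]].
  intros y0 t0 Hy0 e He.
  destruct (level_inv_spec S F y0 t0 Hy0) as [Hx0 Ex0].
  set (x0 := level_inv S F y0 t0) in *.
  destruct (strip_nbhd S u v x0 t0 Hs Hx0) as [r0 [Hr0 Hbox]].
  set (eta := Rmin e r0 / 2).
  assert (Heta : 0 < eta /\ eta < e /\ eta < r0).
  { unfold eta. pose proof (Rmin_l e r0). pose proof (Rmin_r e r0). pose proof (Rmin_pos e r0 He Hr0). lra. }
  assert (Ht0 : u <= t0 <= v) by (eapply strip_level_bounds; eauto).
  assert (Hm0 : S (x0 - eta, t0)). { apply Hbox; auto. unfold Rabs; destruct Rcase_abs; lra.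
    apply Rabs_sub_diag_lt; lra. }
  assert (Hp0 : S (x0 + eta, t0)). { apply Hbox; auto. unfold Rabs; destruct Rcase_abs; lra.
    apply Rabs_sub_diag_lt; lra. }
  assert (Ha : F (x0 - eta) t0 < y0). { rewrite <- Ex0. apply Hm; auto. lra. }
  assert (Hb : y0 < F (x0 + eta) t0). { rewrite <- Ex0. apply Hm; auto. lra. }
  set (k := Rmin (y0 - F (x0 - eta) t0) (F (x0 + eta) t0 - y0) / 2).
  assert (Hk : 0 < k /\ 2*k <= y0 - F (x0 - eta) t0 /\ 2*k <= F (x0 + eta) t0 - y0).
  { unfold k. pose proof (Rmin_l (y0 - F (x0 - eta) t0) (F (x0 + eta) t0 - y0)).
    pose proof (Rmin_r (y0 - F (x0 - eta) t0) (F (x0 + eta) t0 - y0)).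
    pose proof (Rmin_pos (y0 - F (x0 - eta) t0) (F (x0 + eta) t0 - y0) ltac:(lra) ltac:(lra)). lra. }
  destruct (Hc _ _ Hm0 k (proj1 Hk)) as [dm [Hdm Hdm']].
  destruct (Hc _ _ Hp0 k (proj1 Hk)) as [dp [Hdp Hdp']].
  exists (Rmin (Rmin k dm) (Rmin dp r0)). split.
  { repeat apply Rmin_pos; lra. }
  intros y t' Hy H1 H2.
  pose proof (Rmin_l (Rmin k dm) (Rmin dp r0)) as M1. pose proof (Rmin_r (Rmin k dm) (Rmin dp r0)) as M2.
  pose proof (Rmin_l k dm). pose proof (Rmin_r k dm). pose proof (Rmin_l dp r0). pose proof (Rmin_r dp r0).
  destruct (level_inv_spec S F y t' Hy) as [Hx Ex]. set (x := level_inv S F y t') in *.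
  assert (Ht' : u <= t' <= v). { destruct Hy as [z [Hz _]]. eapply strip_level_bounds; eauto. }
  assert (Sm : S (x0 - eta, t')). { apply Hbox; auto. unfold Rabs; destruct Rcase_abs; lra. lra. }
  assert (Sp : S (x0 + eta, t')). { apply Hbox; auto. unfold Rabs; destruct Rcase_abs; lra. lra. }
  specialize (Hdm' _ _ Sm ltac:(apply Rabs_sub_diag_lt; lra) ltac:(lra)).
  specialize (Hdp' _ _ Sp ltac:(apply Rabs_sub_diag_lt; lra) ltac:(lra)).
  apply Rabs_def2 in Hdm'. apply Rabs_def2 in Hdp'. apply Rabs_def2 in H1.
  assert (L1 : F (x0 - eta) t' < F x t')  by (rewrite Ex; lra).
  assert (L2 : F x t' < F (x0 + eta) t') by (rewrite Ex; lra).
  pose proof (level_homeo_reflect_lt S u v F _ _ _ G Sm Hx L1) as L1'.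
  pose proof (level_homeo_reflect_lt S u v F _ _ _ G Hx Sp L2) as L2'.
  clearbody x. destruct Heta as [He1 [He2 He3]]. apply Rabs_def1; lra.
Qed.

Lemma level_inv_homeo S u v F : level_homeo S u v F -> level_homeo (level_image S F) u v (level_inv S F).
Proof. intros G. pose proof G as [Hs [Hc [Hm Hsu]]].
  split; [apply level_image_strip; auto|]. split; [apply (level_inv_continuous S u v F G)|split].
  - intros y1 y2 t H1 H2 H. destruct (level_inv_spec S F y1 t H1) as [A1 B1].
    destruct (level_inv_spec S F y2 t H2) as [A2 B2].
    apply (level_homeo_reflect_lt S u v F _ _ _ G A1 A2). lra.
  - intros t Ht x. exists (F x t). apply (level_invK S u v F); auto. apply Hs. auto.
Qed.

(** * Maximal convex subsets of open subsets of the line *)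

Definition open1 (B : R -> Prop) := forall x, B x -> exists r, 0 < r /\ forall x', Rabs (x' - x) < r -> B x'.
Definition max_convex (B I : R -> Prop) := convex I /\ (forall x, I x -> B x) /\
  (forall I', convex I' -> (forall x, I x -> I' x) -> (forall x, I' x -> B x) -> forall x, I' x -> I x).
Definition increasing_on (B : R -> Prop) (f : R -> R) := forall x y, B x -> B y -> x < y -> f x < f y.

Lemma convex_union (I1 I2 : R -> Prop) z : convex I1 -> convex I2 -> I1 z -> I2 z ->
  convex (fun x => I1 x \/ I2 x).
Proof. intros C1 C2 H1 H2 x y w Hx Hw Hy.
  destruct Hx as [Hx|Hx]; destruct Hw as [Hw|Hw].
  - left. apply (C1 x y w Hx Hw Hy).
  - destruct (Rle_dec y z).
    + left. apply (C1 x y z Hx H1). lra.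
    + right. apply (C2 z y w H2 Hw). lra.
  - destruct (Rle_dec y z).
    + right. apply (C2 x y z Hx H2). lra.
    + left. apply (C1 z y w H1 Hw). lra.
  - right. apply (C2 x y w Hx Hw Hy).
Qed.

Lemma max_convex_open B I x : open1 B -> max_convex B I -> I x ->
  exists r, 0 < r /\ forall x', Rabs (x' - x) < r -> I x'.
Proof. intros HB [C [IB M]] Hx. destruct (HB x (IB x Hx)) as [r [Hr Hr']].
  exists r. split; auto. intros x' Hx'.
  apply (M (fun z => I z \/ Rabs (z - x) < r)); auto.
  - apply (convex_union I (fun z => Rabs (z - x) < r) x C); auto.
    + intros a b c Ha Hc Hb. apply Rabs_def2 in Ha. apply Rabs_def2 in Hc. apply Rabs_def1; lra.
    + replace (x - x) with 0 by ring. rewrite Rabs_R0. auto.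
  - intros z [Hz|Hz]; auto.
Qed.

Lemma lub_approx E b e : is_lub E b -> 0 < e -> exists z, E z /\ b - e < z.
Proof. intros [Hub Hl] He. apply NNPP. intro N.
  assert (b <= b - e). { apply Hl. intros z Hz. destruct (Rle_dec z (b - e)); auto.
    exfalso. apply N. exists z. split; auto. lra. }
  lra. Qed.

Lemma max_convex_right_end B I x0 x1 : open1 B -> max_convex B I -> I x0 -> ~ I x1 -> x0 < x1 ->
  exists b, x0 < b <= x1 /\ ~ B b /\ (forall z, x0 <= z < b -> I z) /\ (forall z, I z -> z < b).
Proof. intros HB HM Hx0 Hx1 Hlt. pose proof HM as [C [IB M]].
  set (E := fun z => I z /\ x0 <= z).
  assert (Hbd : forall z, I z -> z < x1).
  { intros z Hz. destruct (Rlt_dec z x1); auto. exfalso. apply Hx1. apply (C x0 x1 z); auto. lra. }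
  destruct (completeness E) as [b Hb].
  { exists x1. intros z [Hz _]. left. auto. }
  { exists x0. split; auto. lra. }
  pose proof Hb as [Hub Hlub].
  assert (Hlt_b : forall z, I z -> z < b).
  { intros z Hz. destruct (Rle_dec x0 z).
    - destruct (max_convex_open B I z HB HM Hz) as [rr [Hr Hr']].
      assert (E (z + rr/2)). { split; [|lra]. apply Hr'. replace (z + rr/2 - z) with (rr/2) by ring.
        rewrite Rabs_right; lra. }
      specialize (Hub _ H). lra.
    - assert (x0 <= b) by (apply Hub; split; auto; lra). lra. }
  assert (Hin : forall z, x0 <= z < b -> I z).
  { intros z Hz. destruct (lub_approx E b (b - z) Hb ltac:(lra)) as [w [[Hw1 Hw2] Hw3]].
    apply (C x0 z w); auto. lra. }
  exists b. split; [split|split; [|split]].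
  - apply Hlt_b; auto.
  - apply Hlub. intros z [Hz _]. left. auto.
  - intro Bb. destruct (HB b Bb) as [r [Hr Hr']].
    destruct (lub_approx E b r Hb Hr) as [w [[Hw1 Hw2] Hw3]].
    assert (Hwb : w < b) by auto.
    assert (I (b + r/2)).
    { apply (M (fun z => I z \/ Rabs (z - b) < r)).
      - apply (convex_union I (fun z => Rabs (z - b) < r) w C); auto.
        + intros a c d Ha Hd Hc. apply Rabs_def2 in Ha. apply Rabs_def2 in Hd. apply Rabs_def1; lra.
        + apply Rabs_def1; lra.
      - intros z Hz; auto.
      - intros z [Hz|Hz]; auto.
      - right. apply Rabs_def1; lra. }
    specialize (Hlt_b _ H). lra.
  - exact Hin.
  - exact Hlt_b.
Qed.

(* The values of [f] on [B] fill [[f x0, f x1]]; as [f] is increasing and [B] open,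
   [B] has no gap between [x0] and [x1]. *)
Lemma max_convex_extend_right B I f x0 x1 : open1 B -> increasing_on B f -> max_convex B I ->
  I x0 -> B x1 -> x0 < x1 ->
  (forall y, f x0 <= y <= f x1 -> exists z, B z /\ f z = y) -> I x1.
Proof. intros HB Hf HM Hx0 Bx1 Hlt Hsur. pose proof HM as [C [IB M]].
  apply NNPP. intro Nx1.
  destruct (max_convex_right_end B I x0 x1 HB HM Hx0 Nx1 Hlt) as [b [[Hb1 Hb2] [NBb [Hin Hltb]]]].
  set (E := fun w => exists z, x0 <= z < b /\ w = f z).
  destruct (completeness E) as [m Hm].
  { exists (f x1). intros w [z [Hz ->]]. left. apply Hf; auto. lra. }
  { exists (f x0). exists x0. split; auto. lra. }
  pose proof Hm as [Hub Hlub].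
  assert (H0m : f x0 <= m). { apply Hub. exists x0. split; auto. lra. }
  assert (Hm1 : m <= f x1). { apply Hlub. intros w [z [Hz ->]]. left. apply Hf; auto. lra. }
  destruct (Hsur m (conj H0m Hm1)) as [xm [Bxm Exm]].
  destruct (Rtotal_order xm b) as [Hc|[Hc|Hc]].
  - assert (x0 <= xm). { destruct (Rle_dec x0 xm); auto.
      assert (f xm < f x0) by (apply Hf; auto; lra). lra. }
    assert (Hz : I ((xm + b)/2)) by (apply Hin; lra).
    assert (f xm < f ((xm+b)/2)) by (apply Hf; auto; lra).
    assert (f ((xm+b)/2) <= m). { apply Hub. exists ((xm+b)/2). split; auto. lra. }
    lra.
  - subst. contradiction.
  - destruct (HB xm Bxm) as [r [Hr Hr']].
    set (w := xm - Rmin r (xm - b) / 2).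
    assert (Hw : b < w < xm /\ Rabs (w - xm) < r).
    { unfold w. pose proof (Rmin_l r (xm - b)). pose proof (Rmin_r r (xm - b)).
      pose proof (Rmin_pos r (xm - b) Hr ltac:(lra)). split. lra. apply Rabs_def1; lra. }
    assert (Bw : B w) by (apply Hr'; tauto).
    assert (f w < m) by (rewrite <- Exm; apply Hf; auto; tauto).
    destruct (lub_approx E m (m - f w) Hm ltac:(lra)) as [e [[z [Hz ->]] He]].
    assert (f z < f w). { apply Hf. apply IB; apply Hin; lra. auto. lra. }
    lra.
Qed.

Lemma max_convex_extend_left B I f x0 x1 : open1 B -> increasing_on B f -> max_convex B I ->
  I x0 -> B x1 -> x1 < x0 ->
  (forall y, f x1 <= y <= f x0 -> exists z, B z /\ f z = y) -> I x1.
Proof. intros HB Hf HM Hx0 Bx1 Hlt Hsur. pose proof HM as [C [IB M]].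
  set (B' := fun x => B (- x)). set (I' := fun x => I (- x)). set (f' := fun x => - f (- x)).
  assert (I' (- x1)).
  { apply (max_convex_extend_right B' I' f' (- x0) (- x1)).
    - intros x Hx. destruct (HB (-x) Hx) as [r [Hr Hr']]. exists r. split; auto.
      intros x' Hx'. apply Hr'. replace (- x' - - x) with (- (x' - x)) by ring. rewrite Rabs_Ropp. auto.
    - intros x y Hx Hy Hxy. unfold f'. assert (f (- y) < f (- x)) by (apply Hf; auto; lra). lra.
    - split; [|split].
      + intros a b c Ha Hc Hb. apply (C (- c) (- b) (- a)); auto. lra.
      + intros x Hx. apply IB. auto.
      + intros J CJ HJ JB x Hx. unfold I'. replace x with (- - x) in Hx by ring.
        apply (M (fun z => J (- z))); auto.
        * intros a b c Ha Hc Hb. apply (CJ (- c) (- b) (- a)); auto. lra.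
        * intros z Hz. apply HJ. unfold I'. replace (- - z) with z by ring. auto.
        * intros z Hz. apply JB in Hz. unfold B' in Hz. replace (- - z) with z in Hz by ring. auto.
    - unfold I'. replace (- - x0) with x0 by ring. auto.
    - unfold B'. replace (- - x1) with x1 by ring. auto.
    - lra.
    - intros y Hy. unfold f' in Hy. rewrite !Ropp_involutive in Hy.
      destruct (Hsur (- y) ltac:(lra)) as [z [Bz Ez]]. exists (- z). unfold B', f'.
      rewrite Ropp_involutive. split; auto. lra. }
  unfold I' in H. rewrite Ropp_involutive in H. auto.
Qed.

Definition level_image_set (F : R -> R -> R) (J : R*R -> Prop) (p : R*R) : Prop :=
  exists x, J (x, snd p) /\ F x (snd p) = fst p.

Lemma strip_level_open1 S u v t : is_strip S u v -> open1 (fun x => S (x,t)).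
Proof. intros Hs x Hx. destruct (strip_level_nbhd S u v x t Hs Hx) as [r [Hr H]]. exists r. split; auto. Qed.

Lemma boundary_interval_image S u v F J : level_homeo S u v F -> boundary_interval S u v J ->
  boundary_interval (level_image S F) u v (level_image_set F J).
Proof. intros G [t [I [Ht [[x0 Hx0] [C [IS [M HJ]]]]]]].
  pose proof G as [Hs [Hc [Hm Hsu]]].
  assert (HB : open1 (fun x => S (x,t))) by (eapply strip_level_open1; eauto).
  assert (HMc : max_convex (fun x => S (x,t)) I) by (split; [|split]; auto).
  assert (Hf : increasing_on (fun x => S (x,t)) (fun x => F x t)) by (intros a b Ha Hb H; apply Hm; auto).
  exists t, (fun y => exists x, I x /\ F x t = y). split; [auto|]. split; [|split; [|split; [|split]]].
  - exists (F x0 t). exists x0. auto.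
  - intros y1 y y2 [x1 [H1 <-]] [x2 [H2 <-]] Hy.
    destruct (Req_dec y (F x1 t)) as [E|E]; [exists x1; auto|].
    destruct (Req_dec y (F x2 t)) as [E'|E']; [exists x2; auto|].
    assert (Hlt : x1 < x2). { apply (level_homeo_reflect_lt S u v F x1 x2 t G (IS x1 H1) (IS x2 H2)). lra. }
    destruct (level_homeo_IVT S u v F x1 x2 y t G Hlt) as [z [Hz Ez]].
    + intros z Hz. apply IS. apply (C x1 z x2); auto.
    + lra.
    + exists z. split; auto. apply (C x1 z x2); auto.
  - intros y [x [Hx <-]]. exists x. simpl. auto.
  - intros I'' CI'' Hsub HI'' y Hy.
    assert (Hy0 : I'' (F x0 t)) by (apply Hsub; exists x0; auto).
    destruct (HI'' y Hy) as [x1 [Hx1 Ex1]]. simpl in Hx1, Ex1.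
    assert (Hsur : forall a b, I'' a -> I'' b -> forall w, a <= w <= b -> exists z, S (z,t) /\ F z t = w).
    { intros a b Ha Hb w Hw. destruct (HI'' w (CI'' a w b Ha Hb Hw)) as [z [Hz Ez]]. exists z. auto. }
    exists x1. split; auto.
    destruct (Rtotal_order x0 x1) as [L|[L|L]].
    + apply (max_convex_extend_right _ I (fun x => F x t) x0 x1 HB Hf HMc Hx0 Hx1 L).
      intros w Hw. apply (Hsur (F x0 t) y); auto. rewrite <- Ex1. auto.
    + subst. auto.
    + apply (max_convex_extend_left _ I (fun x => F x t) x0 x1 HB Hf HMc Hx0 Hx1 L).
      intros w Hw. apply (Hsur y (F x0 t)); auto. rewrite <- Ex1. auto.
  - intros [y s]. unfold level_image_set. simpl. split.
    + intros [x [Hx E]]. apply HJ in Hx. simpl in Hx. destruct Hx as [Hx ->]. split; auto. exists x. auto.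
    + intros [[x [Hx E]] ->]. exists x. split; auto. apply HJ. simpl. auto.
Qed.

Lemma boundary_interval_sub S u v J p : boundary_interval S u v J -> J p -> S p.
Proof. intros [t [I [_ [_ [_ [IS [_ HJ]]]]]]] Hp. apply HJ in Hp. destruct p as [x t']. simpl in Hp.
  destruct Hp as [Hp ->]. auto. Qed.

(** * Transporting a striped atlas along levelwise homeomorphisms *)

Definition level_map (F : R -> R -> R) (p : R*R) : R*R := (F (fst p) (snd p), snd p).

Lemma level_image_inv S u v F : level_homeo S u v F -> level_image (level_image S F) (level_inv S F) = S.
Proof. intros G. apply functional_extensionality. intro p. apply propositional_extensionality.
  apply (level_image_inv_iff S u v F p G). Qed.

Lemma level_map_continuous S u v F : level_homeo S u v F ->
  continuous_on open2 S open2 (level_image S F) (level_map F).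
Proof. intros G. pose proof G as [Hs [Hc [Hm Hsu]]]. split.
  - intros [x t] Hx. exists x. simpl. auto.
  - intros V HV.
    exists (fun p => exists p0 d, S p0 /\ 0 < d /\
      (forall p', S p' -> Rabs (fst p' - fst p0) < d -> Rabs (snd p' - snd p0) < d -> V (level_map F p')) /\
      Rabs (fst p - fst p0) < d /\ Rabs (snd p - snd p0) < d).
    split.
    + intros p [p0 [d [H0 [Hd [H1 [H2 H3]]]]]].
      exists (Rmin (d - Rabs (fst p - fst p0)) (d - Rabs (snd p - snd p0))). split.
      { apply Rmin_pos; lra. }
      intros p' E1 E2. exists p0, d. split; auto. split; auto. split; auto.
      pose proof (Rmin_l (d - Rabs (fst p - fst p0)) (d - Rabs (snd p - snd p0))).
      pose proof (Rmin_r (d - Rabs (fst p - fst p0)) (d - Rabs (snd p - snd p0))).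
      split.
      * replace (fst p' - fst p0) with ((fst p' - fst p) + (fst p - fst p0)) by ring.
        eapply Rle_lt_trans. apply Rabs_triang. lra.
      * replace (snd p' - snd p0) with ((snd p' - snd p) + (snd p - snd p0)) by ring.
        eapply Rle_lt_trans. apply Rabs_triang. lra.
    + intros [x t] Hx. split.
      * intros HVx. destruct (HV _ HVx) as [e [He He']]. simpl in He'.
        destruct (Hc x t Hx e He) as [d [Hd Hd']].
        exists (x,t), (Rmin d e). split; auto. split; [apply Rmin_pos; lra|]. split.
        { intros [x' t'] Hp' E1 E2. simpl in *. unfold level_map. apply He'; simpl.
          apply Hd'; auto. eapply Rlt_le_trans; eauto. apply Rmin_l. eapply Rlt_le_trans; eauto. apply Rmin_l.
          eapply Rlt_le_trans; eauto. apply Rmin_r. }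
        simpl. split; apply Rabs_sub_diag_lt; apply Rmin_pos; lra.
      * intros [p0 [d [H0 [Hd [H1 [H2 H3]]]]]]. apply H1; auto.
Qed.

Lemma level_map_inv_continuous S u v F : level_homeo S u v F ->
  continuous_on open2 (level_image S F) open2 S (level_map (level_inv S F)).
Proof. intros G. pose proof (level_map_continuous _ _ _ _ (level_inv_homeo S u v F G)) as H.
  rewrite (level_image_inv S u v F G) in H. exact H. Qed.

Definition fiberwise {L : Type} (f : L -> R*R -> R*R) (x : L * (R*R)) : L * (R*R) := (fst x, f (fst x) (snd x)).

Lemma fiberwise_continuous {L : Type} (A B : L -> R*R -> Prop) (f : L -> R*R -> R*R) :
  (forall l, continuous_on open2 (A l) open2 (B l) (f l)) ->
  continuous_on opnP (S0 A) opnP (S0 B) (fiberwise f).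
Proof. intros Hc. split.
  - intros [l p] Hx. unfold S0, fiberwise in *. simpl in *. apply (proj1 (Hc l)). auto.
  - intros V HV.
    exists (fun x => exists W, open2 W /\ (forall p, A (fst x) p -> (V (fst x, f (fst x) p) <-> W p)) /\
      W (snd x)).
    split.
    + intros l p [W [HW [HW1 HW2]]]. simpl in *. destruct (HW p HW2) as [e [He He']].
      exists e. split; auto. intros p' E1 E2. exists W. simpl. split; auto.
    + intros [l p] Hx. unfold S0, fiberwise in *. simpl in *. split.
      * intros HVx. destruct (proj2 (Hc l) (fun p => V (l,p)) (HV l)) as [W [HW HW']].
        exists W. simpl. split; auto. split; auto. apply HW'; auto.
      * intros [W [HW [HW1 HW2]]]. simpl in *. apply HW1; auto.
Qed.

Lemma sub_open_transfer {T T' : Type} (opn : (T -> Prop) -> Prop) (opn' : (T' -> Prop) -> Prop)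
  (A : T -> Prop) (B : T' -> Prop) (f : T -> T') (g : T' -> T) (W : T -> Prop) :
  continuous_on opn A opn' B f -> continuous_on opn' B opn A g -> (forall x, A x -> g (f x) = x) ->
  (sub_open opn A W <-> sub_open opn' B (fun y => W (g y))).
Proof. intros [Af Cf] [Bg Cg] Hgf. split.
  - intros [U [HU HUW]]. destruct (Cg U HU) as [U' [HU' HU'W]]. exists U'. split; auto.
    intros y Hy. rewrite (HUW (g y) (Bg y Hy)). apply HU'W; auto.
  - intros [U [HU HUW]]. destruct (Cf U HU) as [U' [HU' HU'W]]. exists U'. split; auto.
    intros x Hx. rewrite <- (HU'W x Hx). rewrite <- (HUW (f x) (Af x Hx)). rewrite Hgf; tauto.
Qed.

Section Transport.
Context {L Z : Type} (S : L -> R*R -> Prop) (u v : L -> R) (Phi : L -> R -> R -> R).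
Hypothesis HG : forall l, level_homeo (S l) (u l) (v l) (Phi l).

Definition image_strips := fun l => level_image (S l) (Phi l).
Definition strips_map := fiberwise (fun l => level_map (Phi l)).
Definition strips_map_inv := fiberwise (fun l => level_map (level_inv (S l) (Phi l))).
Definition image_bi (b : L * (R*R -> Prop)) : L * (R*R -> Prop) :=
  (fst b, level_image_set (Phi (fst b)) (snd b)).

Lemma strips_map_continuous : continuous_on opnP (S0 S) opnP (S0 image_strips) strips_map.
Proof. apply fiberwise_continuous. intros l. apply (level_map_continuous _ (u l) (v l)). auto. Qed.

Lemma strips_map_inv_continuous : continuous_on opnP (S0 image_strips) opnP (S0 S) strips_map_inv.
Proof. apply fiberwise_continuous. intros l. apply (level_map_inv_continuous _ (u l) (v l)). auto. Qed.

Lemma strips_mapK x : S0 S x -> strips_map_inv (strips_map x) = x.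
Proof. destruct x as [l [x t]]. unfold S0. simpl. intros Hx.
  unfold strips_map_inv, strips_map, fiberwise, level_map. simpl.
  rewrite (level_invK (S l) (u l) (v l) (Phi l) x t (HG l) Hx). auto. Qed.

Lemma strips_map_invK y : S0 image_strips y -> strips_map (strips_map_inv y) = y.
Proof. destruct y as [l [y t]]. unfold S0, image_strips. simpl. intros Hy.
  unfold strips_map_inv, strips_map, fiberwise, level_map. simpl.
  destruct (level_inv_spec (S l) (Phi l) y t Hy) as [_ E]. rewrite E. auto. Qed.

Lemma strips_map_in x : S0 S x -> S0 image_strips (strips_map x).
Proof. apply (proj1 strips_map_continuous). Qed.
Lemma strips_map_inv_in y : S0 image_strips y -> S0 S (strips_map_inv y).
Proof. apply (proj1 strips_map_inv_continuous). Qed.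

Lemma strips_map_homeo : homeo_on opnP (S0 S) opnP (S0 image_strips) strips_map.
Proof. exists strips_map_inv. split; [apply strips_map_continuous|]. split; [apply strips_map_inv_continuous|].
  split. apply strips_mapK. apply strips_map_invK. Qed.

Lemma inB_image_bi b y : inB (image_bi b) y <-> exists x, inB b x /\ strips_map x = y.
Proof. destruct y as [l [y t]]. unfold inB, image_bi, level_image_set. simpl. split.
  - intros [-> [x [Hx E]]]. exists (fst b, (x,t)). simpl. split; auto. unfold strips_map, fiberwise, level_map.
    simpl. rewrite E. auto.
  - intros [[l' [x t']] [[E1 E2] E3]]. simpl in *. unfold strips_map, fiberwise, level_map in E3. simpl in E3.
    inversion E3. subst. split; auto. exists x. auto.
Qed.


Lemma inB_S0 b x : boundary_interval (S (fst b)) (u (fst b)) (v (fst b)) (snd b) -> inB b x -> S0 S x.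
Proof. intros Hb [E Hx]. unfold S0. rewrite E. eapply boundary_interval_sub; eauto. Qed.

Lemma level_image_set_incl l J1 J2 : (forall p, J1 p -> S l p) -> (forall p, J2 p -> S l p) ->
  (forall p, level_image_set (Phi l) J1 p -> level_image_set (Phi l) J2 p) -> forall p, J1 p -> J2 p.
Proof. intros S1 S2 Himp [x t] Hp.
  destruct (Himp (Phi l x t, t)) as [x' [Hx' Ex']]. { exists x. simpl. auto. }
  simpl in *. assert (x' = x).
  { apply (level_homeo_inj (S l) (u l) (v l) (Phi l) x' x t (HG l)). apply S2; exact Hx'. apply S1; exact Hp.
      exact Ex'. }
  subst x'. exact Hx'. Qed.

Lemma same_bi_of_image b1 b2 : boundary_interval (S (fst b1)) (u (fst b1)) (v (fst b1)) (snd b1) ->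
  boundary_interval (S (fst b2)) (u (fst b2)) (v (fst b2)) (snd b2) ->
  same_bi (image_bi b1) (image_bi b2) -> same_bi b1 b2.
Proof. destruct b1 as [l1 J1], b2 as [l2 J2]. unfold image_bi, same_bi. simpl. intros H1 H2 [E HE]. subst l2.
  assert (A1: forall p, J1 p -> S l1 p) by (intros p Hp; apply (boundary_interval_sub _ _ _ J1 p H1 Hp)).
  assert (A2: forall p, J2 p -> S l1 p) by (intros p Hp; apply (boundary_interval_sub _ _ _ J2 p H2 Hp)).
  split; auto. intros p. split.
  exact (level_image_set_incl l1 J1 J2 A1 A2 (fun p => proj1 (HE p)) p).
  exact (level_image_set_incl l1 J2 J1 A2 A1 (fun p => proj2 (HE p)) p).
Qed.

Lemma image_inB_image_bi (q : L * (R*R) -> Z) b z :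
  boundary_interval (S (fst b)) (u (fst b)) (v (fst b)) (snd b) ->
  (image (fun y => q (strips_map_inv y)) (inB (image_bi b)) z <-> image q (inB b) z).
Proof. intros Hb. split.
  - intros [y [Hy <-]]. apply inB_image_bi in Hy. destruct Hy as [x [Hx <-]]. exists x. split; auto.
    rewrite strips_mapK; auto. eapply inB_S0; eauto.
  - intros [x [Hx <-]]. exists (strips_map x). split. apply inB_image_bi. exists x; auto.
    rewrite strips_mapK; auto. eapply inB_S0; eauto.
Qed.

Lemma closed_embedding_transport (opnZ : (Z -> Prop) -> Prop) (q : L * (R*R) -> Z) b :
  boundary_interval (S (fst b)) (u (fst b)) (v (fst b)) (snd b) ->
  closed_embedding opnZ q (inB b) -> closed_embedding opnZ (fun y => q (strips_map_inv y)) (inB (image_bi b)).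
Proof. intros Hb [Inj [[_ Cq] [Op Cl]]].
  assert (Sb : forall x, inB b x -> S0 S x) by (intros; eapply inB_S0; eauto).
  split; [|split; [split|split]].
  - intros y1 y2 H1 H2 E. apply inB_image_bi in H1. apply inB_image_bi in H2.
    destruct H1 as [x1 [H1 <-]]. destruct H2 as [x2 [H2 <-]].
    rewrite !strips_mapK in E by auto. f_equal. apply Inj; auto.
  - auto.
  - intros V HV. destruct (Cq V HV) as [U [HU HUV]].
    destruct (proj2 strips_map_inv_continuous U HU) as [U' [HU' HU'V]].
    exists U'. split; auto. intros y Hy.
    pose proof Hy as Hy'. apply inB_image_bi in Hy'. destruct Hy' as [x [Hx <-]].
    rewrite <- HU'V by (apply strips_map_in; auto). rewrite strips_mapK by auto. apply HUV; auto.
  - intros W [O [HO HOW]].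
    destruct (proj2 strips_map_continuous O HO) as [O' [HO' HO'W]].
    destruct (Op (fun x => W (strips_map x))) as [U [HU HUe]].
    { exists O'. split; auto. intros x Hx. rewrite <- HO'W by auto. apply HOW.
      apply inB_image_bi. exists x; auto. }
    exists U. split; auto. intros z. rewrite image_inB_image_bi by auto. rewrite <- HUe. split.
    + intros [y [Hy [HWy <-]]]. apply inB_image_bi in Hy. destruct Hy as [x [Hx <-]].
      exists x. split; auto. split; auto. rewrite strips_mapK; auto.
    + intros [x [Hx [HWx <-]]]. exists (strips_map x). split. apply inB_image_bi; exists x; auto.
      split; auto. rewrite strips_mapK; auto.
  - assert (E : (fun z => ~ image (fun y => q (strips_map_inv y)) (inB (image_bi b)) z) =
                 (fun z => ~ image q (inB b) z)).
    { apply functional_extensionality. intro z. apply propositional_extensionality.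
      rewrite image_inB_image_bi by auto. tauto. }
    rewrite E. auto.
Qed.

Lemma striped_atlas_transport (opnZ : (Z -> Prop) -> Prop) (G : Type) (q : L * (R*R) -> Z)
  (X Y : G -> L * (R*R -> Prop)) :
  striped_atlas_fam opnZ S u v q X Y ->
  striped_atlas_fam opnZ image_strips u v (fun y => q (strips_map_inv y))
    (fun g => image_bi (X g)) (fun g => image_bi (Y g)).
Proof. intros [Hcnt [Hstr [Hsur [Htop [HX [HY [HXi [HYi [HXY [Hinj [Him [HXe HYe]]]]]]]]]]]].
  split; [auto|]. split.
  { intros l. apply (level_image_strip _ _ _ _ (HG l)). }
  split.
  { intros z. destruct (Hsur z) as [x [Hx <-]]. exists (strips_map x). split. apply strips_map_in; auto.
    rewrite strips_mapK; auto. }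
  split.
  { intros U. rewrite Htop.
    assert (Hl : forall l, sub_open open2 (S l) (fun p => U (q (l,p))) <->
                   sub_open open2 (image_strips l) (fun p => U (q (strips_map_inv (l,p))))).
    { intros l. apply (sub_open_transfer open2 open2 (S l) (image_strips l) (level_map (Phi l))
        (level_map (level_inv (S l) (Phi l)))).
      - apply (level_map_continuous _ (u l) (v l)), HG.
      - apply (level_map_inv_continuous _ (u l) (v l)), HG.
      - intros p Hp. exact (f_equal snd (strips_mapK (l,p) Hp)). }
    split; intros H l; apply Hl; auto. }
  split. { intros g. exact (boundary_interval_image _ _ _ _ _ (HG (fst (X g))) (HX g)). }
  split. { intros g. exact (boundary_interval_image _ _ _ _ _ (HG (fst (Y g))) (HY g)). }
  split. { intros g1 g2 E. apply HXi. apply same_bi_of_image; auto. }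
  split. { intros g1 g2 E. apply HYi. apply same_bi_of_image; auto. }
  split. { intros g1 g2 E. apply (HXY g1 g2). apply same_bi_of_image; auto. }
  split.
  { intros y1 y2 H1 H2 N1 N2 E.
    rewrite <- (strips_map_invK y1 H1). rewrite <- (strips_map_invK y2 H2). f_equal. apply Hinj; auto.
    - apply strips_map_inv_in; auto.
    - apply strips_map_inv_in; auto.
    - intros g. split; intro N; [apply (proj1 (N1 g)) | apply (proj2 (N1 g))]; apply inB_image_bi;
        exists (strips_map_inv y1); split; auto; apply strips_map_invK; auto.
    - intros g. split; intro N; [apply (proj1 (N2 g)) | apply (proj2 (N2 g))]; apply inB_image_bi;
        exists (strips_map_inv y2); split; auto; apply strips_map_invK; auto. }
  split.
  { intros g z. rewrite !image_inB_image_bi; auto. }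
  split.
  { intros g. apply closed_embedding_transport; auto. }
  { intros g. apply closed_embedding_transport; auto. }
Qed.

Lemma strips_map_leaves : maps_leaves (S0_leaf S u v) (S0_leaf image_strips u v) strips_map.
Proof. intros Lf [l [L0 [HL0 HLf]]]. exists l, (level_image_set (Phi l) L0). split.
  - destruct HL0 as [[t [Ht HL]]|Hb].
    + left. exists t. split; auto. intros [y s]. unfold level_image_set. simpl. split.
      * intros [x [Hx _]]. apply HL in Hx. exact Hx.
      * intros ->. destruct (proj2 (proj2 (proj2 (HG l))) t Ht y) as [x Hx]. exists x. split; auto.
        apply HL. simpl. auto.
    + right. apply boundary_interval_image; auto.
  - intros [l' [y s]]. unfold image, level_image_set. simpl. split.
    + intros [[l'' [x t]] [Hx E]]. apply HLf in Hx. simpl in Hx. destruct Hx as [-> Hx].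
      unfold strips_map, fiberwise, level_map in E. simpl in E. inversion E. subst. split; auto. exists x. auto.
    + intros [-> [x [Hx E]]]. exists (l, (x, s)). split. apply HLf. simpl. auto.
      unfold strips_map, fiberwise, level_map. simpl. rewrite E. auto.
Qed.
End Transport.

Definition level_comp (F1 F2 : R -> R -> R) := fun x t => F2 (F1 x t) t.

Lemma level_homeo_comp S u v F1 F2 : level_homeo S u v F1 -> level_homeo (level_image S F1) u v F2 ->
  level_homeo S u v (level_comp F1 F2).
Proof. intros G1 G2. pose proof G1 as [Hs [Hc [Hm Hsu]]]. pose proof G2 as [Hs2 [Hc2 [Hm2 Hsu2]]].
  assert (HI : forall x t, S (x,t) -> level_image S F1 (F1 x t, t)) by (intros x t H; exists x; simpl; auto).
  split; [auto|split; [|split]].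
  - intros x t Hx e He. destruct (Hc2 (F1 x t) t (HI x t Hx) e He) as [d2 [Hd2 Hd2']].
    destruct (Hc x t Hx d2 Hd2) as [d1 [Hd1 Hd1']].
    exists (Rmin d1 d2). split. apply Rmin_pos; auto.
    intros x' t' Hx' E1 E2. unfold level_comp. apply Hd2'; auto.
    apply Hd1'; auto. eapply Rlt_le_trans; eauto; apply Rmin_l. eapply Rlt_le_trans; eauto; apply Rmin_l.
    eapply Rlt_le_trans; eauto; apply Rmin_r.
  - intros x y t Hx Hy H. unfold level_comp. apply Hm2; auto.
  - intros t Ht y. destruct (Hsu2 t Ht y) as [z Hz]. destruct (Hsu t Ht z) as [x Hx].
    exists x. unfold level_comp. rewrite Hx. auto.
Qed.

Lemma level_image_comp S F1 F2 : level_image S (level_comp F1 F2) = level_image (level_image S F1) F2.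
Proof. apply functional_extensionality. intros [y t]. apply propositional_extensionality.
  unfold level_image, level_comp. simpl. split.
  - intros [x [Hx E]]. exists (F1 x t). split; auto. exists x. auto.
  - intros [z [[x [Hx <-]] E]]. exists x. auto.
Qed.

(** * Patching increasing homeomorphisms of disjoint intervals *)

Lemma increasing_surj_continuous (H : R -> R) : (forall x y, x < y -> H x < H y) ->
  (forall y, exists x, H x = y) ->
  forall x e, 0 < e -> exists d, 0 < d /\ forall x', Rabs (x' - x) < d -> Rabs (H x' - H x) < e.
Proof. intros Hm Hs x e He.
  destruct (Hs (H x - e)) as [x1 E1]. destruct (Hs (H x + e)) as [x2 E2].
  assert (x1 < x). { destruct (Rlt_dec x1 x); auto. destruct (Req_dec x1 x). subst. lra.
    assert (H x < H x1) by (apply Hm; lra). lra. }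
  assert (x < x2). { destruct (Rlt_dec x x2); auto. destruct (Req_dec x2 x). subst. lra.
    assert (H x2 < H x) by (apply Hm; lra). lra. }
  exists (Rmin (x - x1) (x2 - x)). split. apply Rmin_pos; lra.
  intros x' Hx'. pose proof (Rmin_l (x - x1) (x2 - x)). pose proof (Rmin_r (x - x1) (x2 - x)).
  apply Rabs_def2 in Hx'. assert (H x1 < H x') by (apply Hm; lra). assert (H x' < H x2) by (apply Hm; lra).
  apply Rabs_def1; lra.
Qed.

Section Patch.
Context (K : Type) (P : K -> Prop) (a b : K -> R) (f : K -> R -> R).
Hypothesis disj : forall k1 k2 x, P k1 -> P k2 -> a k1 < x < b k1 -> a k2 < x < b k2 -> k1 = k2.
Hypothesis mono : forall k x y, P k -> a k < x -> x < y -> y < b k -> f k x < f k y.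
Hypothesis into : forall k x, P k -> a k < x < b k -> a k < f k x < b k.
Hypothesis onto : forall k y, P k -> a k < y < b k -> exists x, a k < x < b k /\ f k x = y.

Definition patch (x : R) : R :=
  match excluded_middle_informative (exists k, P k /\ a k < x < b k) with
  | left H => f (proj1_sig (constructive_indefinite_description _ H)) x
  | right _ => x
  end.

Lemma patch_in k x : P k -> a k < x < b k -> patch x = f k x.
Proof. intros Pk Hx. unfold patch. destruct excluded_middle_informative as [H|H].
  - destruct (constructive_indefinite_description _ H) as [k' [Pk' Hk']]. simpl.
    rewrite (disj k' k x); auto.
  - exfalso. apply H. exists k. auto.
Qed.

Lemma patch_out x : ~ (exists k, P k /\ a k < x < b k) -> patch x = x.
Proof. intros N. unfold patch. destruct excluded_middle_informative as [H|H]; auto. contradiction. Qed.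

Lemma patch_intervals_ordered k1 k2 x y : P k1 -> P k2 -> k1 <> k2 -> a k1 < x < b k1 ->
  a k2 < y < b k2 -> x < y -> b k1 <= a k2.
Proof. intros P1 P2 N H1 H2 Hxy. destruct (Rle_dec (b k1) (a k2)) as [E|E]; auto. exfalso.
  apply N. apply (disj k1 k2 ((Rmax x (a k2) + Rmin (b k1) y)/2)); auto;
  unfold Rmax, Rmin; repeat destruct Rle_dec; lra.
Qed.

Lemma patch_mono x y : x < y -> patch x < patch y.
Proof. intros Hxy.
  destruct (classic (exists k, P k /\ a k < x < b k)) as [[k1 [P1 H1]]|N1];
  destruct (classic (exists k, P k /\ a k < y < b k)) as [[k2 [P2 H2]]|N2].
  - rewrite (patch_in k1 x), (patch_in k2 y); auto.
    destruct (classic (k1 = k2)) as [E|E].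
    + subst. apply mono; tauto.
    + pose proof (patch_intervals_ordered k1 k2 x y P1 P2 E H1 H2 Hxy). pose proof (into k1 x P1 H1).
      pose proof (into k2 y P2 H2). lra.
  - rewrite (patch_in k1 x), (patch_out y); auto. pose proof (into k1 x P1 H1).
    assert (b k1 <= y). { destruct (Rle_dec (b k1) y); auto. exfalso. apply N2. exists k1. split; auto. lra. }
    lra.
  - rewrite (patch_out x), (patch_in k2 y); auto. pose proof (into k2 y P2 H2).
    assert (x <= a k2). { destruct (Rle_dec x (a k2)); auto. exfalso. apply N1. exists k2. split; auto. lra. }
    lra.
  - rewrite (patch_out x), (patch_out y); auto.
Qed.

Lemma patch_surj y : exists x, patch x = y /\ (forall k, P k -> a k < y < b k -> a k < x < b k) /\
   ((~ exists k, P k /\ a k < y < b k) -> x = y).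
Proof. destruct (classic (exists k, P k /\ a k < y < b k)) as [[k [Pk Hk]]|N].
  - destruct (onto k y Pk Hk) as [x [Hx E]]. exists x. split. rewrite (patch_in k x); auto.
    split. intros k' Pk' Hk'. rewrite (disj k' k y); auto. intro N. exfalso. apply N. exists k. auto.
  - exists y. split. apply patch_out; auto. split. intros k Pk Hk. exfalso. apply N. exists k. auto. auto.
Qed.

Lemma patch_pres (B : R -> Prop) : (forall k x, P k -> a k < x < b k -> B x) ->
  (forall x, B x -> B (patch x)) /\ (forall y, B y -> exists x, B x /\ patch x = y).
Proof. intros HB. split.
  - intros x Bx. destruct (classic (exists k, P k /\ a k < x < b k)) as [[k [Pk Hk]]|N].
    + rewrite (patch_in k x Pk Hk). apply (HB k). auto. apply into; auto.
    + rewrite patch_out; auto.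
  - intros y By. destruct (patch_surj y) as [x [E [H1 H2]]]. exists x. split; auto.
    destruct (classic (exists k, P k /\ a k < y < b k)) as [[k [Pk Hk]]|N].
    + apply (HB k); auto.
    + rewrite H2; auto.
Qed.
End Patch.

(** * Interpolating between the boundary levels *)

Definition rel_height (u v t : R) := (t - u) / (v - u).
Definition height_interp (u v : R) (Hu Hv : R -> R) :=
  fun x t => (1 - rel_height u v t) * Hu x + rel_height u v t * Hv x.

Lemma rel_height_range u v t : u < v -> u <= t <= v -> 0 <= rel_height u v t <= 1.
Proof. intros. unfold rel_height. split.
  - apply Rmult_le_pos; [lra|]. left. apply Rinv_0_lt_compat. lra.
  - apply (Rmult_le_reg_r (v - u)). lra. unfold Rdiv. rewrite Rmult_assoc, Rinv_l by lra. lra.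
Qed.

Lemma rel_height_lo u v : u < v -> rel_height u v u = 0.
Proof. intros. unfold rel_height. unfold Rdiv. replace (u - u) with 0 by ring. ring. Qed.
Lemma rel_height_hi u v : u < v -> rel_height u v v = 1.
Proof. intros. unfold rel_height. field. lra. Qed.

Lemma height_interp_lo u v Hu Hv x : u < v -> height_interp u v Hu Hv x u = Hu x.
Proof. intros. unfold height_interp. rewrite rel_height_lo by auto. ring. Qed.
Lemma height_interp_hi u v Hu Hv x : u < v -> height_interp u v Hu Hv x v = Hv x.
Proof. intros. unfold height_interp. rewrite rel_height_hi by auto. ring. Qed.

Lemma rel_height_dist u v t t' : u < v -> Rabs (rel_height u v t' - rel_height u v t) = Rabs (t' - t) / (v - u).
Proof. intros. unfold rel_height.
  replace ((t' - u) / (v - u) - (t - u) / (v - u)) with ((t' - t) / (v - u)) by (field; lra).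
  unfold Rdiv. rewrite Rabs_mult. rewrite (Rabs_right (/ (v - u))). auto. left. apply Rinv_0_lt_compat.
  lra. Qed.

Lemma convex_comb_lt l a b c : 0 <= l <= 1 -> a < c -> b < c -> (1 - l) * a + l * b < c.
Proof. intros Hl Ha Hb. assert (0 <= (1 - l) * (c - a)) by (apply Rmult_le_pos; lra).
  assert (0 <= l * (c - b)) by (apply Rmult_le_pos; lra).
  destruct (Rlt_dec l 1).
  + assert (0 < (1 - l) * (c - a)) by (apply Rmult_lt_0_compat; lra). lra.
  + assert (0 < l * (c - b)) by (apply Rmult_lt_0_compat; lra). lra. Qed.

Lemma convex_comb_gt l a b c : 0 <= l <= 1 -> c < a -> c < b -> c < (1 - l) * a + l * b.
Proof. intros Hl Ha Hb. assert (0 <= (1 - l) * (a - c)) by (apply Rmult_le_pos; lra).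
  assert (0 <= l * (b - c)) by (apply Rmult_le_pos; lra).
  destruct (Rlt_dec l 1).
  + assert (0 < (1 - l) * (a - c)) by (apply Rmult_lt_0_compat; lra). lra.
  + assert (0 < l * (b - c)) by (apply Rmult_lt_0_compat; lra). lra. Qed.

Lemma height_interp_continuous S u v Hu Hv : is_strip S u v ->
  (forall x y, x < y -> Hu x < Hu y) -> (forall y, exists x, Hu x = y) ->
  (forall x y, x < y -> Hv x < Hv y) -> (forall y, exists x, Hv x = y) ->
  continuous2_on S (height_interp u v Hu Hv).
Proof. intros Hs Mu Su Mv Sv. pose proof Hs as [Huv _].
  pose proof (increasing_surj_continuous Hu Mu Su) as Cu.
  pose proof (increasing_surj_continuous Hv Mv Sv) as Cv.
  intros x t Hx e He.
  set (M := Rabs (Hv x - Hu x) + 1).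
  assert (HM : 0 < M) by (unfold M; pose proof (Rabs_pos (Hv x - Hu x)); lra).
  destruct (Cu x (e/3) ltac:(lra)) as [d1 [Hd1 Hd1']].
  destruct (Cv x (e/3) ltac:(lra)) as [d2 [Hd2 Hd2']].
  set (d3 := e * (v - u) / (3 * M)).
  assert (Hd3 : 0 < d3). { unfold d3. apply Rmult_lt_0_compat. nra. apply Rinv_0_lt_compat. lra. }
  exists (Rmin (Rmin d1 d2) d3). split. repeat apply Rmin_pos; auto.
  intros x' t' Hx' E1 E2.
  pose proof (Rmin_l (Rmin d1 d2) d3). pose proof (Rmin_r (Rmin d1 d2) d3).
  pose proof (Rmin_l d1 d2). pose proof (Rmin_r d1 d2).
  specialize (Hd1' x' ltac:(lra)). specialize (Hd2' x' ltac:(lra)).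
  assert (Hl' : 0 <= rel_height u v t' <= 1) by
    (apply rel_height_range; auto; eapply strip_level_bounds; eauto).
  assert (Hld : Rabs (rel_height u v t' - rel_height u v t) * Rabs (Hv x - Hu x) < e/3).
  { rewrite rel_height_dist by auto.
    assert (Rabs (t' - t) / (v - u) < e / (3 * M)).
    { apply (Rmult_lt_reg_r (v - u)). lra. unfold Rdiv. rewrite Rmult_assoc, Rinv_l by lra.
      rewrite Rmult_1_r. replace (e * / (3 * M) * (v - u)) with d3 by (unfold d3; field; lra). lra. }
    assert (0 <= Rabs (t' - t) / (v - u)). { unfold Rdiv. apply Rmult_le_pos. apply Rabs_pos. left.
      apply Rinv_0_lt_compat. lra. }
    assert (Rabs (Hv x - Hu x) < M) by (unfold M; lra).
    pose proof (Rabs_pos (Hv x - Hu x)).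
    replace (e/3) with (e / (3 * M) * M) by (field; lra).
    set (al := e / (3 * M)) in *. set (aa := Rabs (t' - t) / (v - u)) in *. set (bb := Rabs (Hv x - Hu x)) in *.
    assert (0 <= (al - aa) * M) by (apply Rmult_le_pos; lra).
    assert (0 <= aa * (M - bb)) by (apply Rmult_le_pos; lra).
    assert (0 < (al - aa) * M) by (apply Rmult_lt_0_compat; lra).
    nra. }
  unfold height_interp.
  replace ((1 - rel_height u v t') * Hu x' + rel_height u v t' * Hv x' - ((1 - rel_height u v t) * Hu x + rel_height u v t * Hv x))
    with ((1 - rel_height u v t') * (Hu x' - Hu x) + rel_height u v t' * (Hv x' - Hv x) + (rel_height u v t' - rel_height u v t) * (Hv x - Hu x)) by ring.
  eapply Rle_lt_trans. apply Rabs_triang. eapply Rle_lt_trans. apply Rplus_le_compat_r. apply Rabs_triang.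
  rewrite !Rabs_mult. rewrite (Rabs_right (1 - rel_height u v t')) by lra.
  rewrite (Rabs_right (rel_height u v t')) by lra.
  assert ((1 - rel_height u v t') * Rabs (Hu x' - Hu x) <= (1 - rel_height u v t') * (e/3)) by
    (apply Rmult_le_compat_l; lra).
  assert (rel_height u v t' * Rabs (Hv x' - Hv x) <= rel_height u v t' * (e/3)) by
    (apply Rmult_le_compat_l; lra).
  nra.
Qed.

Lemma height_interp_level_onto u v Hu Hv t y : u < v -> u < t < v ->
  (forall x y, x < y -> Hu x < Hu y) -> (forall y, exists x, Hu x = y) ->
  (forall x y, x < y -> Hv x < Hv y) -> (forall y, exists x, Hv x = y) ->
  exists x, height_interp u v Hu Hv x t = y.
Proof. intros Huv Ht Mu Su Mv Sv.
  pose proof (increasing_surj_continuous Hu Mu Su) as Cu.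
  pose proof (increasing_surj_continuous Hv Mv Sv) as Cv.
  assert (Hl : 0 <= rel_height u v t <= 1) by (apply rel_height_range; auto; lra).
  destruct (Su y) as [x1 E1]. destruct (Sv y) as [x2 E2].
  set (lo := Rmin x1 x2 - 1). set (hi := Rmax x1 x2 + 1).
  assert (Hlo : lo < x1 /\ lo < x2) by (unfold lo; pose proof (Rmin_l x1 x2); pose proof (Rmin_r x1 x2); lra).
  assert (Hhi : x1 < hi /\ x2 < hi) by (unfold hi; pose proof (Rmax_l x1 x2); pose proof (Rmax_r x1 x2); lra).
  destruct (IVT_interval (fun x => height_interp u v Hu Hv x t) lo hi y) as [z [_ Ez]].
  + lra.
  + intros x _ e He. destruct (Cu x e He) as [d1 [Hd1 Hd1']]. destruct (Cv x e He) as [d2 [Hd2 Hd2']].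
    exists (Rmin d1 d2). split. apply Rmin_pos; auto. intros x' _ Hx'.
    specialize (Hd1' x' ltac:(eapply Rlt_le_trans; eauto; apply Rmin_l)).
    specialize (Hd2' x' ltac:(eapply Rlt_le_trans; eauto; apply Rmin_r)).
    unfold height_interp.
    replace ((1 - rel_height u v t) * Hu x' + rel_height u v t * Hv x' - ((1 - rel_height u v t) * Hu x + rel_height u v t * Hv x))
      with ((1 - rel_height u v t) * (Hu x' - Hu x) + rel_height u v t * (Hv x' - Hv x)) by ring.
    eapply Rle_lt_trans. apply Rabs_triang. rewrite !Rabs_mult.
    rewrite (Rabs_right (1 - rel_height u v t)) by lra. rewrite (Rabs_right (rel_height u v t)) by lra.
    assert ((1 - rel_height u v t) * Rabs (Hu x' - Hu x) <= (1 - rel_height u v t) * e) by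
      (apply Rmult_le_compat_l; lra).
    assert (rel_height u v t * Rabs (Hv x' - Hv x) <= rel_height u v t * e) by (apply Rmult_le_compat_l; lra).
    nra.
  + unfold height_interp. pose proof (Mu lo x1 (proj1 Hlo)). pose proof (Mv lo x2 (proj2 Hlo)).
    pose proof (Mu x1 hi (proj1 Hhi)). pose proof (Mv x2 hi (proj2 Hhi)). subst y.
    split; [apply convex_comb_lt|apply convex_comb_gt]; auto; lra.
  + exists z. exact Ez.
Qed.

Lemma height_interp_homeo S u v Hu Hv : is_strip S u v ->
  (forall x y, x < y -> Hu x < Hu y) -> (forall y, exists x, Hu x = y) ->
  (forall x y, x < y -> Hv x < Hv y) -> (forall y, exists x, Hv x = y) ->
  level_homeo S u v (height_interp u v Hu Hv).
Proof. intros Hs Mu Su Mv Sv. pose proof Hs as [Huv _].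
  split; [auto|split; [apply height_interp_continuous; auto|split]].
  - intros x y t Hx Hy Hxy.
    assert (Hl : 0 <= rel_height u v t <= 1) by
      (apply rel_height_range; auto; eapply strip_level_bounds; eauto).
    unfold height_interp. specialize (Mu x y Hxy). specialize (Mv x y Hxy).
    assert (0 <= (1 - rel_height u v t) * (Hu y - Hu x)) by (apply Rmult_le_pos; lra).
    assert (0 <= rel_height u v t * (Hv y - Hv x)) by (apply Rmult_le_pos; lra).
    destruct (Rlt_dec (rel_height u v t) 1).
    + assert (0 < (1 - rel_height u v t) * (Hu y - Hu x)) by (apply Rmult_lt_0_compat; lra). lra.
    + assert (0 < rel_height u v t * (Hv y - Hv x)) by (apply Rmult_lt_0_compat; lra). lra.
  - intros t Ht y. apply height_interp_level_onto; auto.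
Qed.

Lemma height_interp_image S u v Hu Hv : level_homeo S u v (height_interp u v Hu Hv) ->
  (forall x, S (x,u) -> S (Hu x, u)) -> (forall y, S (y,u) -> exists x, S (x,u) /\ Hu x = y) ->
  (forall x, S (x,v) -> S (Hv x, v)) -> (forall y, S (y,v) -> exists x, S (x,v) /\ Hv x = y) ->
  level_image S (height_interp u v Hu Hv) = S.
Proof. intros G P1 P2 P3 P4. pose proof G as [Hs [_ [_ Hsu]]]. pose proof Hs as [Huv [Hint _]].
  apply functional_extensionality. intros [y t]. apply propositional_extensionality. unfold level_image.
  simpl. split.
  - intros [x [Hx E]]. pose proof (strip_level_bounds _ _ _ _ _ Hs Hx).
    destruct (Req_dec t u) as [->|Nu]. { rewrite height_interp_lo in E by auto. subst. auto. }
    destruct (Req_dec t v) as [->|Nv]. { rewrite height_interp_hi in E by auto. subst. auto. }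
    apply Hint. lra.
  - intros Hy. pose proof (strip_level_bounds _ _ _ _ _ Hs Hy).
    destruct (Req_dec t u) as [->|Nu]. { destruct (P2 y Hy) as [x [Hx E]]. exists x.
      rewrite height_interp_lo by auto. auto. }
    destruct (Req_dec t v) as [->|Nv]. { destruct (P4 y Hy) as [x [Hx E]]. exists x.
      rewrite height_interp_hi by auto. auto. }
    destruct (Hsu t ltac:(lra) y) as [x Hx]. exists x. split; auto. apply Hint. lra.
Qed.

(** * Boundary intervals of model strips *)

Lemma Rabs_le_inv x M : Rabs x <= M -> - M <= x <= M.
Proof. unfold Rabs; destruct Rcase_abs; lra. Qed.

Lemma open_bounded_convex_interval (I : R -> Prop) M : open1 I -> convex I -> (exists x, I x) ->
  (forall x, I x -> Rabs x <= M) ->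
  exists a b, a < b /\ forall x, I x <-> a < x < b.
Proof. intros HO C [x0 Hx0] Hb.
  destruct (completeness I) as [b Hbl].
  { exists M. intros z Hz. specialize (Hb z Hz). apply Rabs_le_inv in Hb. lra. }
  { exists x0; auto. }
  destruct (completeness (fun z => I (- z))) as [a' Hal].
  { exists M. intros z Hz. specialize (Hb _ Hz). rewrite Rabs_Ropp in Hb. apply Rabs_le_inv in Hb. lra. }
  { exists (- x0). rewrite Ropp_involutive. auto. }
  assert (K : forall x, I x -> - a' < x < b).
  { intros x Hx. destruct (HO x Hx) as [r [Hr Hr']]. split.
    - assert (I (x - r/2)) by (apply Hr'; apply Rabs_def1; lra).
      assert (- (x - r/2) <= a') by (apply (proj1 Hal); rewrite Ropp_involutive; auto). lra.
    - assert (I (x + r/2)) by (apply Hr'; apply Rabs_def1; lra).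
      assert (x + r/2 <= b) by (apply (proj1 Hbl); auto). lra. }
  exists (- a'), b. split. { specialize (K x0 Hx0). lra. }
  intros x. split; auto. intros Hx.
  destruct (lub_approx I b (b - x) Hbl ltac:(lra)) as [w [Hw Hw']].
  destruct (lub_approx (fun z => I (- z)) a' (a' + x) Hal ltac:(lra)) as [w' [Hw1 Hw2]].
  apply (C (- w') x w); auto. lra.
Qed.

Lemma boundary_interval_bounded S u v J : is_strip S u v -> (exists M, forall p, J p -> Rabs (fst p) <= M) ->
  boundary_interval S u v J ->
  exists a b t, a < b /\ (t = u \/ t = v) /\ forall p, J p <-> (a < fst p < b /\ snd p = t).
Proof. intros Hs [M HM] [t [I [Ht [Hne [C [IS [Mx HJ]]]]]]].
  assert (HO : open1 I).
  { intros x Hx. apply (max_convex_open (fun z => S (z,t)) I x); auto.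
    eapply strip_level_open1; eauto. split; auto. }
  destruct (open_bounded_convex_interval I M HO C Hne) as [a [b [Hab HI]]].
  { intros x Hx. apply (HM (x,t)). apply HJ. simpl. auto. }
  exists a, b, t. split; auto. split; auto. intros p. rewrite HJ. rewrite HI. tauto.
Qed.

Lemma boundary_interval_meet S u v J1 J2 p : boundary_interval S u v J1 ->
  boundary_interval S u v J2 -> J1 p -> J2 p ->
  forall p', J1 p' <-> J2 p'.
Proof. intros [t1 [I1 [Ht1 [Hne1 [C1 [IS1 [M1 HJ1]]]]]]] [t2 [I2 [Ht2 [Hne2 [C2 [IS2 [M2 HJ2]]]]]]] H1 H2.
  apply HJ1 in H1. apply HJ2 in H2. destruct H1 as [H1 E1]. destruct H2 as [H2 E2]. rewrite E1 in E2. subst t2.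
  assert (CU : convex (fun z => I1 z \/ I2 z)) by (apply (convex_union I1 I2 (fst p)); auto).
  assert (US : forall z, I1 z \/ I2 z -> S (z, t1)) by (intros z [Hz|Hz]; auto).
  assert (A : forall z, I2 z -> I1 z) by (intros z Hz; apply (M1 _ CU); auto).
  assert (B : forall z, I1 z -> I2 z).
  { intros z Hz. apply (M2 (fun z => I1 z \/ I2 z)); auto. }
  intros p'. rewrite HJ1, HJ2. split; intros [Hp' Ep']; split; auto.
Qed.

Definition bi_data (J : R*R -> Prop) : R*(R*R) := epsilon (inhabits (0,(0,0)))
  (fun w => fst w < fst (snd w) /\ forall p, J p <-> (fst w < fst p < fst (snd w) /\ snd p = snd (snd w))).
Definition bi_lo J := fst (bi_data J).
Definition bi_hi J := fst (snd (bi_data J)).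
Definition bi_level J := snd (snd (bi_data J)).

Lemma bi_data_spec J : (exists a b t, a < b /\ forall p, J p <-> (a < fst p < b /\ snd p = t)) ->
  bi_lo J < bi_hi J /\ forall p, J p <-> (bi_lo J < fst p < bi_hi J /\ snd p = bi_level J).
Proof. intros [a [b [t [Hab H]]]]. unfold bi_lo, bi_hi, bi_level, bi_data.
  apply (epsilon_spec (inhabits (0,(0,0)))
    (fun w => fst w < fst (snd w) /\ forall p, J p <-> (fst w < fst p < fst (snd w) /\ snd p = snd (snd w)))).
  exists (a,(b,t)). simpl. auto.
Qed.

Lemma model_bi_data S u v J : model_strip S u v -> boundary_interval S u v J ->
  bi_lo J < bi_hi J /\ (forall p, J p <-> (bi_lo J < fst p < bi_hi J /\ snd p = bi_level J)) /\
    (bi_level J = u \/ bi_level J = v).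
Proof. intros [Hs [Hbd _]] HJ.
  destruct (boundary_interval_bounded S u v J Hs (Hbd J HJ) HJ) as [a [b [t [Hab [Ht H]]]]].
  destruct (bi_data_spec J) as [H1 H2]. { exists a, b, t. auto. }
  split; auto. split; auto.
  assert (E : bi_level J = t).
  { assert (J ((a+b)/2, t)) by (apply H; simpl; split; [lra|auto]).
    apply H2 in H0. simpl in H0. destruct H0. auto. }
  rewrite E. auto.
Qed.

(** * Making the gluing maps affine *)

Lemma segment_in_interval c d x y t : c < x < d -> c < y < d -> 0 <= t <= 1 -> c < x + t * (y - x) < d.
Proof. intros Hx Hy Ht. replace (x + t * (y - x)) with ((1 - t) * x + t * y) by ring.
  split; [apply convex_comb_gt|apply convex_comb_lt]; lra. Qed.

Lemma continuous_along_segment f c d s s' : continuous_within (fun x => c < x < d) f ->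
  c < s < d -> c < s' < d -> continuous_within (fun t => 0 <= t <= 1) (fun t => f (s + t * (s' - s))).
Proof. intros Hf Hs Hs' t Ht e He.
  destruct (Hf (s + t * (s' - s)) (segment_in_interval c d s s' t Hs Hs' Ht) e He) as [d0 [Hd0 Hd0']].
  exists (d0 / (Rabs (s' - s) + 1)). split.
  { apply Rdiv_lt_0_compat; auto. pose proof (Rabs_pos (s' - s)). lra. }
  intros t' Ht' Htt. apply Hd0'. apply segment_in_interval; auto.
  replace (s + t' * (s' - s) - (s + t * (s' - s))) with ((t' - t) * (s' - s)) by ring.
  rewrite Rabs_mult. pose proof (Rabs_pos (s' - s)). pose proof (Rabs_pos (t' - t)).
  apply (Rmult_lt_compat_r (Rabs (s' - s) + 1)) in Htt; [|lra].
  unfold Rdiv in Htt. rewrite Rmult_assoc, Rinv_l in Htt by lra. nra.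
Qed.

(* If [f] were not monotone, moving a pair [s1 < s2] with [f s2 < f s1] continuously to a pair
   [s3 < s4] with [f s3 < f s4] would, by the intermediate value theorem, meet a pair with equal
   values. *)
Lemma injective_continuous_monotone f c d : continuous_within (fun x => c < x < d) f ->
  (forall s s', c < s < d -> c < s' < d -> f s = f s' -> s = s') ->
  (forall s s', c < s -> s < s' -> s' < d -> f s < f s') \/
  (forall s s', c < s -> s < s' -> s' < d -> f s' < f s).
Proof. intros Hf Hinj.
  destruct (classic (forall s s', c < s -> s < s' -> s' < d -> f s < f s')) as [H|H]; [left; auto|right].
  apply not_all_ex_not in H. destruct H as [s1 H]. apply not_all_ex_not in H. destruct H as [s2 H].
  assert (Hs : c < s1 /\ s1 < s2 /\ s2 < d /\ ~ f s1 < f s2) by tauto. clear H.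
  destruct Hs as [H1 [H12 [H2 N12]]].
  assert (L12 : f s2 < f s1).
  { destruct (Rtotal_order (f s2) (f s1)) as [E|[E|E]]; auto.
    - apply Hinj in E; lra.
    - lra. }
  intros s3 s4 H3 H34 H4. apply Rnot_le_lt. intro N34.
  assert (L34 : f s3 < f s4).
  { destruct N34 as [E|E]; auto. apply Hinj in E; lra. }
  set (sg := fun t => s1 + t * (s3 - s1)). set (rh := fun t => s2 + t * (s4 - s2)).
  assert (Isg : forall t, 0 <= t <= 1 -> c < sg t < d) by (intros; apply segment_in_interval; lra).
  assert (Irh : forall t, 0 <= t <= 1 -> c < rh t < d) by (intros; apply segment_in_interval; lra).
  assert (Lt : forall t, 0 <= t <= 1 -> sg t < rh t).
  { intros t Ht. unfold sg, rh. replace (s1 + t * (s3 - s1)) with ((1-t)*s1 + t*s3) by ring.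
    replace (s2 + t * (s4 - s2)) with ((1-t)*s2 + t*s4) by ring.
    destruct (Rlt_dec t 1). assert (0 < (1 - t) * (s2 - s1)) by (apply Rmult_lt_0_compat; lra). nra. nra. }
  destruct (IVT_interval (fun t => f (rh t) - f (sg t)) 0 1 0) as [t [Ht Et]].
  - lra.
  - intros t Ht e He.
    destruct (continuous_along_segment f c d s2 s4 Hf ltac:(lra) ltac:(lra) t Ht (e/2) ltac:(lra)) as [d1 [Hd1 Hd1']].
    destruct (continuous_along_segment f c d s1 s3 Hf ltac:(lra) ltac:(lra) t Ht (e/2) ltac:(lra)) as [d2 [Hd2 Hd2']].
    exists (Rmin d1 d2). split. { apply Rmin_pos; auto. }
    intros t' Ht' Htt. pose proof (Rmin_l d1 d2). pose proof (Rmin_r d1 d2).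
    specialize (Hd1' t' Ht' ltac:(lra)). specialize (Hd2' t' Ht' ltac:(lra)).
    apply Rabs_def2 in Hd1'. apply Rabs_def2 in Hd2'. apply Rabs_def1; unfold sg, rh; lra.
  - unfold sg, rh. rewrite !Rmult_0_l, !Rmult_1_l, !Rplus_0_r.
    replace (s2 + (s4 - s2)) with s4 by ring. replace (s1 + (s3 - s1)) with s3 by ring. lra.
  - assert (E : f (rh t) = f (sg t)) by lra.
    apply Hinj in E; try (apply Irh; auto); try (apply Isg; auto). specialize (Lt t Ht). lra.
Qed.

Section Affinize.
Context {L Z G : Type} (opnZ : (Z -> Prop) -> Prop) (S : L -> R*R -> Prop) (u v : L -> R)
  (q : L * (R*R) -> Z) (X Y : G -> L * (R*R -> Prop)).
Hypothesis Hfam : striped_atlas_fam opnZ S u v q X Y.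
Hypothesis Hmod : forall l, model_strip (S l) (u l) (v l).

Lemma X_boundary_interval g : boundary_interval (S (fst (X g))) (u (fst (X g))) (v (fst (X g))) (snd (X g)).
Proof. apply Hfam. Qed.
Lemma Y_boundary_interval g : boundary_interval (S (fst (Y g))) (u (fst (Y g))) (v (fst (Y g))) (snd (Y g)).
Proof. apply Hfam. Qed.

Definition aX g := bi_lo (snd (X g)).
Definition bX g := bi_hi (snd (X g)).
Definition tX g := bi_level (snd (X g)).
Definition aY g := bi_lo (snd (Y g)).
Definition bY g := bi_hi (snd (Y g)).
Definition tY g := bi_level (snd (Y g)).

Lemma X_spec g : aX g < bX g /\ (forall p, snd (X g) p <-> (aX g < fst p < bX g /\ snd p = tX g)) /\
  (tX g = u (fst (X g)) \/ tX g = v (fst (X g))).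
Proof. apply (model_bi_data (S (fst (X g))) (u (fst (X g))) (v (fst (X g)))). apply Hmod.
  apply X_boundary_interval. Qed.
Lemma Y_spec g : aY g < bY g /\ (forall p, snd (Y g) p <-> (aY g < fst p < bY g /\ snd p = tY g)) /\
  (tY g = u (fst (Y g)) \/ tY g = v (fst (Y g))).
Proof. apply (model_bi_data (S (fst (Y g))) (u (fst (Y g))) (v (fst (Y g)))). apply Hmod.
  apply Y_boundary_interval. Qed.

Lemma inBX g x : inB (X g) x <-> (fst x = fst (X g) /\ aX g < fst (snd x) < bX g /\ snd (snd x) = tX g).
Proof. unfold inB. rewrite (proj1 (proj2 (X_spec g))). tauto. Qed.
Lemma inBY g x : inB (Y g) x <-> (fst x = fst (Y g) /\ aY g < fst (snd x) < bY g /\ snd (snd x) = tY g).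
Proof. unfold inB. rewrite (proj1 (proj2 (Y_spec g))). tauto. Qed.

Definition glue_map g s := epsilon (inhabits 0) (fun x => aX g < x < bX g /\
   q (fst (X g), (x, tX g)) = q (fst (Y g), (s, tY g))).

Lemma X_Y_same_image g z : image q (inB (X g)) z <-> image q (inB (Y g)) z.
Proof. apply Hfam. Qed.
Lemma X_closed_embedding g : closed_embedding opnZ q (inB (X g)).
Proof. apply Hfam. Qed.
Lemma Y_closed_embedding g : closed_embedding opnZ q (inB (Y g)).
Proof. apply Hfam. Qed.

Lemma glue_map_spec g s : aY g < s < bY g -> aX g < glue_map g s < bX g /\
   q (fst (X g), (glue_map g s, tX g)) = q (fst (Y g), (s, tY g)).
Proof. intros Hs. unfold glue_map. apply (epsilon_spec (inhabits 0) (fun x => aX g < x < bX g /\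
   q (fst (X g), (x, tX g)) = q (fst (Y g), (s, tY g)))).
  destruct (proj2 (X_Y_same_image g (q (fst (Y g), (s, tY g))))) as [[l [x t]] [Hx E]].
  { exists (fst (Y g), (s, tY g)). split; auto. apply inBY. simpl. auto. }
  apply inBX in Hx. simpl in Hx. destruct Hx as [-> [Hx ->]]. exists x. auto.
Qed.

Lemma qX_inj g x x' : aX g < x < bX g -> aX g < x' < bX g ->
  q (fst (X g), (x, tX g)) = q (fst (X g), (x', tX g)) -> x = x'.
Proof. intros H1 H2 E. destruct (X_closed_embedding g) as [Inj _].
  assert (K := Inj (fst (X g), (x, tX g)) (fst (X g), (x', tX g))
    ltac:(apply inBX; simpl; auto) ltac:(apply inBX; simpl; auto) E).
  inversion K. auto. Qed.
Lemma qY_inj g x x' : aY g < x < bY g -> aY g < x' < bY g ->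
  q (fst (Y g), (x, tY g)) = q (fst (Y g), (x', tY g)) -> x = x'.
Proof. intros H1 H2 E. destruct (Y_closed_embedding g) as [Inj _].
  assert (K := Inj (fst (Y g), (x, tY g)) (fst (Y g), (x', tY g))
    ltac:(apply inBY; simpl; auto) ltac:(apply inBY; simpl; auto) E).
  inversion K. auto. Qed.

Lemma glue_map_inj g s s' : aY g < s < bY g -> aY g < s' < bY g -> glue_map g s = glue_map g s' -> s = s'.
Proof. intros H1 H2 E. destruct (glue_map_spec g s H1) as [_ E1]. destruct (glue_map_spec g s' H2) as [_ E2].
  apply (qY_inj g); auto. rewrite <- E1, <- E2, E. auto. Qed.

Lemma glue_map_surj g x : aX g < x < bX g -> exists s, aY g < s < bY g /\ glue_map g s = x.
Proof. intros Hx. destruct (proj1 (X_Y_same_image g (q (fst (X g), (x, tX g))))) as [[l [s t]] [Hs E]].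
  { exists (fst (X g), (x, tX g)). split; auto. apply inBX. simpl. auto. }
  apply inBY in Hs. simpl in Hs. destruct Hs as [-> [Hs ->]]. exists s. split; auto.
  destruct (glue_map_spec g s Hs) as [H1 H2]. apply (qX_inj g); auto. rewrite H2. auto.
Qed.

Lemma glue_map_continuous g : continuous_within (fun s => aY g < s < bY g) (glue_map g).
Proof. intros s0 Hs0 e He.
  destruct (X_closed_embedding g) as [_ [_ [Op _]]]. destruct (Y_closed_embedding g) as [_ [[_ Cq] _]].
  set (W := fun y : L * (R*R) => Rabs (fst (snd y) - glue_map g s0) < e).
  destruct (Op W) as [U [HU HUe]].
  { exists W. split; [|intros; tauto]. intros l p Hp. exists (e - Rabs (fst p - glue_map g s0)). split.
      unfold W in Hp. simpl in Hp. lra.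
    intros p' E1 E2. unfold W. simpl.
    replace (fst p' - glue_map g s0) with ((fst p' - fst p) + (fst p - glue_map g s0)) by ring.
    eapply Rle_lt_trans. apply Rabs_triang. lra. }
  destruct (glue_map_spec g s0 Hs0) as [P0 Q0].
  assert (U0 : U (q (fst (Y g), (s0, tY g)))).
  { apply (HUe (q (fst (Y g), (s0, tY g)))). exists (fst (X g), (glue_map g s0, tX g)). split.
    apply inBX; simpl; auto. split; auto. unfold W. simpl. apply Rabs_sub_diag_lt; auto. }
  destruct (Cq U HU) as [O [HO HOe]].
  assert (O0 : O (fst (Y g), (s0, tY g))) by (apply HOe; auto; apply inBY; simpl; auto).
  destruct (HO (fst (Y g)) (s0, tY g) O0) as [r [Hr Hr']].
  exists r. split; auto. intros s Hs Hss.
  assert (Os : O (fst (Y g), (s, tY g))) by (apply Hr'; simpl; auto; apply Rabs_sub_diag_lt; auto).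
  assert (Us : U (q (fst (Y g), (s, tY g)))) by (apply HOe; auto; apply inBY; simpl; auto).
  destruct (glue_map_spec g s Hs) as [P1 Q1].
  destruct (proj2 (HUe (q (fst (Y g), (s, tY g))))) as [[l [x1 t]] [Hx [Wx Ex]]].
  { split; auto. exists (fst (X g), (glue_map g s, tX g)). split; auto. apply inBX; simpl; auto. }
  apply inBX in Hx. simpl in Hx. destruct Hx as [-> [Hx1 ->]].
  assert (x1 = glue_map g s) by (apply (qX_inj g); auto; rewrite Ex, Q1; auto).
  subst x1. unfold W in Wx. simpl in Wx. auto.
Qed.



Lemma glue_map_monotone g : (forall s s', aY g < s -> s < s' -> s' < bY g -> glue_map g s < glue_map g s') \/
                    (forall s s', aY g < s -> s < s' -> s' < bY g -> glue_map g s' < glue_map g s).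
Proof. apply injective_continuous_monotone.
  - exact (glue_map_continuous g).
  - intros s s' Hs Hs'. apply glue_map_inj; auto.
Qed.

Definition glue_incr g : bool := if excluded_middle_informative
   (forall s s', aY g < s -> s < s' -> s' < bY g -> glue_map g s < glue_map g s') then true else false.

Lemma glue_incr_true g : glue_incr g = true -> forall s s', aY g < s -> s < s' -> s' < bY g ->
  glue_map g s < glue_map g s'.
Proof. unfold glue_incr. destruct excluded_middle_informative; auto. discriminate. Qed.
Lemma glue_incr_false g : glue_incr g = false -> forall s s', aY g < s -> s < s' -> s' < bY g ->
  glue_map g s' < glue_map g s.
Proof. unfold glue_incr. destruct excluded_middle_informative as [H|H]. discriminate.
  intros _. destruct (glue_map_monotone g) as [H'|H']; auto. contradiction. Qed.

Definition glue_affine g s := if glue_incr g then (bX g - aX g) / (bY g - aY g) * (s - aY g) + aX g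
                      else (aX g - bX g) / (bY g - aY g) * (s - aY g) + bX g.

Definition glue_map_inv g x := epsilon (inhabits 0) (fun s => aY g < s < bY g /\ glue_map g s = x).
Definition correction g x := glue_affine g (glue_map_inv g x).

Lemma glue_map_inv_spec g x : aX g < x < bX g -> aY g < glue_map_inv g x < bY g /\
  glue_map g (glue_map_inv g x) = x.
Proof. intros Hx. unfold glue_map_inv.
  apply (epsilon_spec (inhabits 0) (fun s => aY g < s < bY g /\ glue_map g s = x)).
  apply glue_map_surj; auto. Qed.

Lemma glue_map_invK g s : aY g < s < bY g -> glue_map_inv g (glue_map g s) = s.
Proof. intros Hs. destruct (glue_map_spec g s Hs) as [H1 _].
  destruct (glue_map_inv_spec g (glue_map g s) H1) as [A B].
  apply (glue_map_inj g); auto. Qed.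

Lemma XY_pos g : aX g < bX g /\ aY g < bY g.
Proof. split. apply (proj1 (X_spec g)). apply (proj1 (Y_spec g)). Qed.

Lemma glue_affine_range g s : aY g < s < bY g -> aX g < glue_affine g s < bX g.
Proof. intros Hs. destruct (XY_pos g) as [H1 H2]. unfold glue_affine.
  assert (0 < (s - aY g) / (bY g - aY g) < 1).
  { split. apply Rdiv_lt_0_compat; lra. apply (Rmult_lt_reg_r (bY g - aY g)). lra.
    unfold Rdiv. rewrite Rmult_assoc, Rinv_l by lra. lra. }
  destruct (glue_incr g).
  - replace ((bX g - aX g) / (bY g - aY g) * (s - aY g) + aX g) with
      ((bX g - aX g) * ((s - aY g) / (bY g - aY g)) + aX g) by (field; lra). nra.
  - replace ((aX g - bX g) / (bY g - aY g) * (s - aY g) + bX g) with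
      (bX g - (bX g - aX g) * ((s - aY g) / (bY g - aY g))) by (field; lra). nra.
Qed.

Lemma glue_affine_onto g y : aX g < y < bX g -> exists s, aY g < s < bY g /\ glue_affine g s = y.
Proof. intros Hy. destruct (XY_pos g) as [H1 H2]. unfold glue_affine. destruct (glue_incr g).
  - exists (aY g + (y - aX g) * ((bY g - aY g) / (bX g - aX g))).
    assert (0 < (y - aX g) / (bX g - aX g) < 1).
    { split. apply Rdiv_lt_0_compat; lra. apply (Rmult_lt_reg_r (bX g - aX g)). lra.
      unfold Rdiv. rewrite Rmult_assoc, Rinv_l by lra. lra. }
    split. replace (aY g + (y - aX g) * ((bY g - aY g) / (bX g - aX g))) with
      (aY g + (bY g - aY g) * ((y - aX g) / (bX g - aX g))) by (field; lra). nra.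
    field; lra.
  - exists (aY g + (bX g - y) * ((bY g - aY g) / (bX g - aX g))).
    assert (0 < (bX g - y) / (bX g - aX g) < 1).
    { split. apply Rdiv_lt_0_compat; lra. apply (Rmult_lt_reg_r (bX g - aX g)). lra.
      unfold Rdiv. rewrite Rmult_assoc, Rinv_l by lra. lra. }
    split. replace (aY g + (bX g - y) * ((bY g - aY g) / (bX g - aX g))) with
      (aY g + (bY g - aY g) * ((bX g - y) / (bX g - aX g))) by (field; lra). nra.
    field; lra.
Qed.

Lemma glue_affine_incr g s s' : glue_incr g = true -> s < s' -> glue_affine g s < glue_affine g s'.
Proof. intros E H. destruct (XY_pos g). unfold glue_affine. rewrite E.
  assert (0 < (bX g - aX g) / (bY g - aY g)) by (apply Rdiv_lt_0_compat; lra). nra. Qed.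
Lemma glue_affine_decr g s s' : glue_incr g = false -> s < s' -> glue_affine g s' < glue_affine g s.
Proof. intros E H. destruct (XY_pos g). unfold glue_affine. rewrite E.
  assert ((aX g - bX g) / (bY g - aY g) < 0).
  { unfold Rdiv. apply Rmult_neg_pos. lra. apply Rinv_0_lt_compat. lra. } nra. Qed.

Lemma correction_into g x : aX g < x < bX g -> aX g < correction g x < bX g.
Proof. intros Hx. unfold correction. apply glue_affine_range. apply glue_map_inv_spec; auto. Qed.

Lemma correction_mono g x x' : aX g < x -> x < x' -> x' < bX g -> correction g x < correction g x'.
Proof. intros H1 H2 H3. destruct (glue_map_inv_spec g x ltac:(lra)) as [A1 B1].
  destruct (glue_map_inv_spec g x' ltac:(lra)) as [A2 B2].
  unfold correction. destruct (glue_incr g) eqn:E.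
  - apply glue_affine_incr; auto.
    destruct (Rtotal_order (glue_map_inv g x) (glue_map_inv g x')) as [LL|[LL|LL]]; auto.
    + rewrite LL in B1. lra.
    + pose proof (glue_incr_true g E _ _ (proj1 A2) LL (proj2 A1)). lra.
  - apply glue_affine_decr; auto.
    destruct (Rtotal_order (glue_map_inv g x') (glue_map_inv g x)) as [LL|[LL|LL]]; auto.
    + rewrite LL in B2. lra.
    + pose proof (glue_incr_false g E _ _ (proj1 A1) LL (proj2 A2)). lra.
Qed.

Lemma correction_onto g y : aX g < y < bX g -> exists x, aX g < x < bX g /\ correction g x = y.
Proof. intros Hy. destruct (glue_affine_onto g y Hy) as [s [Hs E]]. exists (glue_map g s). split.
  apply glue_map_spec; auto. unfold correction. rewrite glue_map_invK; auto. Qed.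

Lemma correction_glue_map g s : aY g < s < bY g -> correction g (glue_map g s) = glue_affine g s.
Proof. intros Hs. unfold correction. rewrite glue_map_invK; auto. Qed.

Definition X_at_level (l : L) (t : R) (g : G) : Prop := fst (X g) = l /\ tX g = t.

Lemma X_injective g1 g2 : same_bi (X g1) (X g2) -> g1 = g2.
Proof. apply Hfam. Qed.
Lemma X_Y_distinct g1 g2 : ~ same_bi (X g1) (Y g2).
Proof. apply Hfam. Qed.

Lemma X_at_level_disjoint l t g1 g2 x : X_at_level l t g1 -> X_at_level l t g2 -> aX g1 < x < bX g1 ->
  aX g2 < x < bX g2 -> g1 = g2.
Proof. intros [E1 T1] [E2 T2] H1 H2. apply X_injective. split. congruence.
  assert (B1 := X_boundary_interval g1). assert (B2 := X_boundary_interval g2). rewrite E1 in B1.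
  rewrite E2 in B2.
  apply (boundary_interval_meet (S l) (u l) (v l) (snd (X g1)) (snd (X g2)) (x,t)); auto.
  - apply X_spec. simpl. auto.
  - apply X_spec. simpl. auto.
Qed.

Definition level_correction (l : L) (t : R) : R -> R := patch G (X_at_level l t) aX bX correction.

Lemma level_correction_X l t g x : X_at_level l t g -> aX g < x < bX g ->
  level_correction l t x = correction g x.
Proof. intros. unfold level_correction. apply (patch_in G (X_at_level l t) aX bX correction); auto.
  intros; eapply X_at_level_disjoint; eauto. Qed.

Lemma level_correction_mono l t x y : x < y -> level_correction l t x < level_correction l t y.
Proof. apply patch_mono. intros; eapply X_at_level_disjoint; eauto. intros; apply correction_mono; tauto.
  intros; apply correction_into; auto. Qed.

Lemma level_correction_surj l t y : exists x, level_correction l t x = y.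
Proof. destruct (patch_surj G (X_at_level l t) aX bX correction) with (y := y) as [x [E _]].
  intros; eapply X_at_level_disjoint; eauto. intros; apply correction_onto; auto. exists x; auto. Qed.

Lemma level_correction_strip l t : (forall x, S l (x,t) -> S l (level_correction l t x, t)) /\
  (forall y, S l (y,t) -> exists x, S l (x,t) /\ level_correction l t x = y).
Proof. apply (patch_pres G (X_at_level l t) aX bX correction).
  intros; eapply X_at_level_disjoint; eauto. intros; apply correction_into; auto. intros;
  apply correction_onto; auto.
  intros g x [E T] Hx. assert (B := X_boundary_interval g). rewrite E in B.
  apply (boundary_interval_sub (S l) (u l) (v l) (snd (X g))); auto. apply X_spec. simpl. auto.
Qed.

(* On the boundary level of [X g] the affinizer is [correction g], and on [Y g] it is the identity,
   so in the reparametrized atlas the gluing map of [g] becomes [glue_affine g]. *)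
Definition affinizer (l : L) := height_interp (u l) (v l) (level_correction l (u l)) (level_correction l (v l)).

Lemma affinizer_homeo l : level_homeo (S l) (u l) (v l) (affinizer l).
Proof. apply height_interp_homeo. apply (Hmod l). apply level_correction_mono. apply level_correction_surj.
  apply level_correction_mono. apply level_correction_surj. Qed.

Lemma uv_lt l : u l < v l.
Proof. apply (Hmod l). Qed.

Lemma affinizer_image l : level_image (S l) (affinizer l) = S l.
Proof. apply height_interp_image. apply affinizer_homeo. apply level_correction_strip.
  apply level_correction_strip. apply level_correction_strip. apply level_correction_strip. Qed.

Lemma affinizer_boundary l t x : t = u l \/ t = v l -> affinizer l x t = level_correction l t x.
Proof. intros [->| ->]; unfold affinizer. apply height_interp_lo, uv_lt. apply height_interp_hi, uv_lt. Qed.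

Lemma level_correction_Y g s : aY g < s < bY g -> level_correction (fst (Y g)) (tY g) s = s.
Proof. intros Hs. unfold level_correction. apply patch_out. intros [g' [[E T] H']].
  apply (X_Y_distinct g' g). split; auto.
  assert (B1 := X_boundary_interval g'). assert (B2 := Y_boundary_interval g). rewrite E in B1.
  apply (boundary_interval_meet (S (fst (Y g))) (u (fst (Y g))) (v (fst (Y g)))
    (snd (X g')) (snd (Y g)) (s, tY g)); auto.
  - apply X_spec. simpl. auto.
  - apply Y_spec. simpl. auto.
Qed.

Lemma tX_boundary g : tX g = u (fst (X g)) \/ tX g = v (fst (X g)).
Proof. apply X_spec. Qed.
Lemma tY_boundary g : tY g = u (fst (Y g)) \/ tY g = v (fst (Y g)).
Proof. apply Y_spec. Qed.

Lemma affinizer_X g x : aX g < x < bX g -> affinizer (fst (X g)) x (tX g) = correction g x.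
Proof. intros Hx. rewrite affinizer_boundary by apply tX_boundary. apply level_correction_X; auto. split;
  auto. Qed.

Lemma affinizer_Y g s : aY g < s < bY g -> affinizer (fst (Y g)) s (tY g) = s.
Proof. intros Hs. rewrite affinizer_boundary by apply tY_boundary. apply level_correction_Y; auto. Qed.

Lemma X_in_strip g x : aX g < x < bX g -> S (fst (X g)) (x, tX g).
Proof. intros. apply (boundary_interval_sub _ _ _ _ _ (X_boundary_interval g)). apply X_spec. simpl. auto. Qed.
Lemma Y_in_strip g s : aY g < s < bY g -> S (fst (Y g)) (s, tY g).
Proof. intros. apply (boundary_interval_sub _ _ _ _ _ (Y_boundary_interval g)). apply Y_spec. simpl. auto. Qed.

Lemma affinizer_image_X g p : level_image_set (affinizer (fst (X g))) (snd (X g)) p <-> (aX g < fst p < bX g /\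
  snd p = tX g).
Proof. destruct p as [y t]. unfold level_image_set. simpl. split.
  - intros [x [Hx E]]. apply X_spec in Hx. simpl in Hx. destruct Hx as [Hx ->].
    rewrite affinizer_X in E by auto.
    subst y. split; auto. apply correction_into; auto.
  - intros [Hy ->]. destruct (correction_onto g y Hy) as [x [Hx E]]. exists x. split.
    apply X_spec. simpl. auto. rewrite affinizer_X; auto.
Qed.

Lemma affinizer_image_Y g p : level_image_set (affinizer (fst (Y g))) (snd (Y g)) p <-> (aY g < fst p < bY g /\
  snd p = tY g).
Proof. destruct p as [y t]. unfold level_image_set. simpl. split.
  - intros [x [Hx E]]. apply Y_spec in Hx. simpl in Hx. destruct Hx as [Hx ->].
    rewrite affinizer_Y in E by auto.
    subst y. split; auto.
  - intros [Hy ->]. exists y. split. apply Y_spec. simpl. auto. rewrite affinizer_Y; auto.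
Qed.

Lemma affinized_gluing g s : aY g < s < bY g ->
  q (strips_map_inv S affinizer (fst (X g), (glue_affine g s, tX g))) =
  q (strips_map_inv S affinizer (fst (Y g), (s, tY g))).
Proof. intros Hs. unfold strips_map_inv, fiberwise, level_map. simpl.
  destruct (glue_map_spec g s Hs) as [P1 P2].
  assert (E1 : level_inv (S (fst (X g))) (affinizer (fst (X g))) (glue_affine g s) (tX g) = glue_map g s).
  { rewrite <- (correction_glue_map g s Hs). rewrite <- affinizer_X by auto.
    apply (level_invK _ _ _ _ _ _ (affinizer_homeo (fst (X g)))). apply X_in_strip; auto. }
  assert (E2 : level_inv (S (fst (Y g))) (affinizer (fst (Y g))) s (tY g) = s).
  { pattern s at 1. rewrite <- (affinizer_Y g s Hs).
    apply (level_invK _ _ _ _ _ _ (affinizer_homeo (fst (Y g)))). apply Y_in_strip; auto. }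
  rewrite E1, E2. auto.
Qed.

Lemma affinizer_image_strips : image_strips S affinizer = S.
Proof. apply functional_extensionality. intro l. unfold image_strips. apply affinizer_image. Qed.

Lemma affinization : (forall l, level_homeo (S l) (u l) (v l) (affinizer l)) /\ image_strips S affinizer = S /\
  affine_atlas opnZ S u v (fun x => q (strips_map_inv S affinizer x)).
Proof. split; [apply affinizer_homeo|]. split; [apply affinizer_image_strips|]. split; [auto|].
  exists G, (fun g => image_bi affinizer (X g)), (fun g => image_bi affinizer (Y g)). split.
  - rewrite <- affinizer_image_strips at 1. apply striped_atlas_transport; auto. apply affinizer_homeo.
  - intros g. exists (aX g), (bX g), (aY g), (bY g), (tX g), (tY g).
    split. apply (proj1 (X_spec g)). split. apply (proj1 (Y_spec g)). split. apply affinizer_image_X. split.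
    apply affinizer_image_Y.
    unfold image_bi. simpl. destruct (glue_incr g) eqn:E.
    + left. intros s Hs. pose proof (affinized_gluing g s Hs) as H. unfold glue_affine in H.
      rewrite E in H. exact H.
    + right. intros s Hs. pose proof (affinized_gluing g s Hs) as H. unfold glue_affine in H.
      rewrite E in H. exact H.
Qed.
End Affinize.

(** * Components of bounded open subsets of the line *)

Section LeftEnd.
Variable B : R -> Prop.
Hypothesis HBo : open1 B.
(* The bound [2] exceeds the range of [atan], which confines the boundary levels below. *)
Hypothesis HB2 : forall z, 2 <= Rabs z -> ~ B z.

(* For [x] in [B], [left_end x] is the left end of the component of [B] containing [x];
   otherwise it is [x]. *)
Definition left_end (x : R) : R := epsilon (inhabits 0) (fun m => is_lub (fun c => c <= x /\ ~ B c) m).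

Lemma notB_low z : z <= -2 -> ~ B z.
Proof. intros. apply HB2. unfold Rabs; destruct Rcase_abs; lra. Qed.
Lemma left_end_spec x : is_lub (fun c => c <= x /\ ~ B c) (left_end x).
Proof. unfold left_end. apply (epsilon_spec (inhabits 0) (fun m => is_lub (fun c => c <= x /\ ~ B c) m)).
  destruct (completeness (fun c => c <= x /\ ~ B c)) as [m Hm].
  - exists x. intros c [Hc _]. auto.
  - exists (Rmin x (-2)). split. apply Rmin_l. apply notB_low. apply Rmin_r.
  - exists m; auto.
Qed.

Lemma left_end_le x : left_end x <= x.
Proof. apply (proj2 (left_end_spec x)). intros c [Hc _]. auto. Qed.

Lemma left_end_ge c x : c <= x -> ~ B c -> c <= left_end x.
Proof. intros. apply (proj1 (left_end_spec x)). auto. Qed.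

Lemma left_end_ge2 x : Rmin x (-2) <= left_end x.
Proof. apply left_end_ge. apply Rmin_l. apply notB_low. apply Rmin_r. Qed.

Lemma left_end_notB x : ~ B (left_end x).
Proof. intro Hb. destruct (HBo _ Hb) as [r [Hr Hr']].
  destruct (lub_approx _ _ r (left_end_spec x) Hr) as [c [[Hc1 Hc2] Hc3]].
  assert (c <= left_end x) by (apply (proj1 (left_end_spec x)); auto).
  apply Hc2. apply Hr'. apply Rabs_def1; lra.
Qed.

Lemma left_end_between x z : left_end x < z <= x -> B z.
Proof. intros [H1 H2]. apply NNPP. intro N. assert (z <= left_end x) by (apply left_end_ge; auto). lra. Qed.

Lemma left_end_lt x : B x -> left_end x < x.
Proof. intros Hx. destruct (left_end_le x) as [H|H]; auto. exfalso. apply (left_end_notB x). rewrite H.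
  auto. Qed.

Lemma left_end_char x l : l < x -> ~ B l -> (forall w, l < w <= x -> B w) -> left_end x = l.
Proof. intros H1 H2 H3. apply Rle_antisym.
  - apply (proj2 (left_end_spec x)). intros c [Hc1 Hc2]. destruct (Rle_dec c l); auto. exfalso. apply Hc2.
    apply H3. lra.
  - apply left_end_ge; auto. lra.
Qed.

End LeftEnd.

Definition right_end (B : R -> Prop) (x : R) : R := - left_end (fun z => B (- z)) (- x).

Section ComponentEnds.
Variable B : R -> Prop.
Hypothesis HBo : open1 B.
Hypothesis HB2 : forall z, 2 <= Rabs z -> ~ B z.

Let B' := fun z => B (- z).
Lemma open1_opp : open1 B'.
Proof. intros x Hx. destruct (HBo _ Hx) as [r [Hr Hr']]. exists r. split; auto. intros x' Hx'. apply Hr'.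
  replace (- x' - - x) with (- (x' - x)) by ring. rewrite Rabs_Ropp. auto. Qed.
Lemma bounded_opp : forall z, 2 <= Rabs z -> ~ B' z.
Proof. intros z Hz. apply HB2. rewrite Rabs_Ropp. auto. Qed.

Lemma right_end_notB x : ~ B (right_end B x).
Proof. unfold right_end; fold B'. pose proof (left_end_notB B' open1_opp bounded_opp (- x)). unfold B' in H.
  auto. Qed.
Lemma right_end_between x z : x <= z < right_end B x -> B z.
Proof. unfold right_end; fold B'. intros Hz. pose proof (left_end_between B' bounded_opp (- x) (- z)) as H.
  assert (H0 : B' (- z)) by (apply H; lra). unfold B' in H0. rewrite Ropp_involutive in H0. auto. Qed.
Lemma right_end_gt x : B x -> x < right_end B x.
Proof. intros Hx. unfold right_end; fold B'. pose proof (left_end_lt B' open1_opp bounded_opp (- x)) as H.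
  assert (H0 : left_end B' (- x) < - x) by (apply H; unfold B'; rewrite Ropp_involutive; auto). lra. Qed.
Lemma right_end_char x r : x < r -> ~ B r -> (forall w, x <= w < r -> B w) -> right_end B x = r.
Proof. intros H1 H2 H3. unfold right_end; fold B'. rewrite (left_end_char B' bounded_opp (- x) (- r)).
  ring. lra.
  unfold B'. rewrite Ropp_involutive. auto.
  intros w Hw. unfold B'. apply H3. lra. Qed.
Lemma right_end_le2 x : right_end B x <= Rmax x 2.
Proof. unfold right_end; fold B'. pose proof (left_end_ge2 B' bounded_opp (- x)). unfold Rmin, Rmax in *.
  repeat destruct Rle_dec; lra. Qed.

Lemma comp_mem x z : B x -> left_end B x < z < right_end B x -> B z.
Proof. intros Hx Hz. destruct (Rle_dec z x). apply (left_end_between B HB2 x z). lra.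
  apply (right_end_between x z). lra. Qed.

Lemma comp_ends_const x z : B x -> left_end B x < z < right_end B x -> left_end B z = left_end B x /\
  right_end B z = right_end B x.
Proof. intros Hx Hz. split.
  - apply left_end_char; auto. lra. apply left_end_notB; auto. intros w Hw. apply (comp_mem x w); auto. lra.
  - apply right_end_char; auto. lra. apply right_end_notB. intros w Hw. apply (comp_mem x w); auto. lra.
Qed.

Lemma comp_order x y : B x -> B y -> x < y -> (left_end B y = left_end B x /\
  right_end B y = right_end B x) \/ right_end B x <= left_end B y.
Proof. intros Hx Hy Hxy. destruct (Rlt_dec y (right_end B x)).
  - left. apply comp_ends_const; auto. pose proof (left_end_le B HB2 x). lra.
  - right. apply left_end_ge; auto. lra. apply right_end_notB.
Qed.

Lemma comp_bounds x : B x -> -2 <= left_end B x /\ right_end B x <= 2.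
Proof. intros Hx. assert (Rabs x < 2) by (destruct (Rlt_dec (Rabs x) 2); auto; exfalso; apply (HB2 x);
  auto; lra).
  apply Rabs_def2 in H. pose proof (left_end_ge2 B HB2 x). pose proof right_end_le2 x.
  unfold Rmin, Rmax in *. repeat destruct Rle_dec; lra. Qed.
End ComponentEnds.

(** * Shrinking the boundary intervals *)

Lemma max_min_mono p q r p' q' r' : p < p' -> q < q' -> r < r' -> Rmax (Rmin p q) r < Rmax (Rmin p' q') r'.
Proof. intros. unfold Rmax, Rmin. repeat destruct Rle_dec; lra. Qed.

Lemma max_min_lipschitz p q r p' q' r' :
  Rabs (Rmax (Rmin p q) r - Rmax (Rmin p' q') r') <= Rabs (p - p') + Rabs (q - q') + Rabs (r - r').
Proof. unfold Rmax, Rmin. pose proof (Rabs_pos (p - p')). pose proof (Rabs_pos (q - q')).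
  pose proof (Rabs_pos (r - r')).
  repeat destruct Rle_dec; unfold Rabs in *; repeat destruct Rcase_abs; lra. Qed.

Lemma slope_perturbation_bound K K0 x x0 c dd : 1 <= K -> 0 <= c <= 4 -> dd <= 1 ->
  Rabs (x - x0) <= dd -> Rabs (K - K0) <= dd ->
  Rabs (K * (x - x0)) + Rabs ((K - K0) * c) <= (K0 + 1) * dd + dd * 4.
Proof. intros HK Hc Hdd Hx HKK. rewrite !Rabs_mult, (Rabs_right K), (Rabs_right c) by lra.
  pose proof (Rabs_pos (x - x0)). pose proof (Rabs_pos (K - K0)).
  assert (K <= K0 + 1) by (apply Rabs_le_inv in HKK; lra).
  assert (K * Rabs (x - x0) <= (K0 + 1) * dd) by (apply Rmult_le_compat; lra).
  assert (Rabs (K - K0) * c <= dd * 4) by (apply Rmult_le_compat; lra). lra.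
Qed.

Section Shrink.
Variable B : R -> Prop.
Hypothesis HBo : open1 B.
Hypothesis HB2 : forall z, 2 <= Rabs z -> ~ B z.

Definition comp_lo x := left_end B x.
Definition comp_hi x := right_end B x.
Definition mid_third x := (comp_lo x + comp_hi x + x) / 3.
(* On each component [(a, b)] of [B], [mid_third] maps [(a, b)] affinely onto its middle third;
   [shrink_slope K] is [mid_third] cut off by the lines of slope [K] through [(a, a)] and [(b, b)],
   an increasing homeomorphism of [(a, b)] which is the identity for [K = 1] and depends
   continuously on [K]. *)
Definition shrink_slope (K x : R) : R :=
  if excluded_middle_informative (B x)
  then Rmax (Rmin (mid_third x) (comp_lo x + K * (x - comp_lo x))) (comp_hi x - K * (comp_hi x - x))
  else x.
Definition shrink (x : R) : R := if excluded_middle_informative (B x) then mid_third x else x.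

Lemma comp_lo_lt x : B x -> comp_lo x < x.
Proof. apply left_end_lt; auto. Qed.
Lemma comp_hi_gt x : B x -> x < comp_hi x.
Proof. apply right_end_gt; auto. Qed.

Lemma shrink_slope_in K x : B x ->
  shrink_slope K x =
  Rmax (Rmin (mid_third x) (comp_lo x + K * (x - comp_lo x))) (comp_hi x - K * (comp_hi x - x)).
Proof. intros Hx. unfold shrink_slope. destruct excluded_middle_informative; tauto. Qed.
Lemma shrink_slope_out K x : ~ B x -> shrink_slope K x = x.
Proof. intros Hx. unfold shrink_slope. destruct excluded_middle_informative; tauto. Qed.
Lemma shrink_in x : B x -> shrink x = mid_third x.
Proof. intros Hx. unfold shrink. destruct excluded_middle_informative; tauto. Qed.

Lemma mid_third_range x : B x ->
  comp_lo x + (comp_hi x - comp_lo x)/3 < mid_third x < comp_hi x - (comp_hi x - comp_lo x)/3.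
Proof. intros Hx. pose proof (comp_lo_lt x Hx). pose proof (comp_hi_gt x Hx). unfold mid_third. split; lra. Qed.

Lemma shrink_slope_range K x : 1 <= K -> B x -> comp_lo x < shrink_slope K x < comp_hi x.
Proof. intros HK Hx. rewrite shrink_slope_in by auto. pose proof (comp_lo_lt x Hx).
  pose proof (comp_hi_gt x Hx).
  pose proof (mid_third_range x Hx).
  assert (0 < K * (x - comp_lo x)) by (apply Rmult_lt_0_compat; lra).
  assert (0 < K * (comp_hi x - x)) by (apply Rmult_lt_0_compat; lra).
  unfold Rmax, Rmin. repeat destruct Rle_dec; lra. Qed.

Lemma same_comp x y : B x -> comp_lo x < y < comp_hi x -> comp_lo y = comp_lo x /\ comp_hi y = comp_hi x.
Proof. apply comp_ends_const; auto. Qed.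

Lemma diff_comp x y : B x -> B y -> x < y -> (comp_lo y = comp_lo x /\
  comp_hi y = comp_hi x) \/ comp_hi x <= comp_lo y.
Proof. apply comp_order; auto. Qed.

Lemma notB_side x y : B x -> ~ B y -> y <= comp_lo x \/ comp_hi x <= y.
Proof. intros Hx Hy. destruct (Rle_dec y (comp_lo x)); auto. destruct (Rle_dec (comp_hi x) y); auto.
  exfalso. apply Hy. apply (comp_mem B HB2 x y); auto. unfold comp_lo, comp_hi in *. lra. Qed.

Lemma shrink_slope_mono K x y : 1 <= K -> x < y -> shrink_slope K x < shrink_slope K y.
Proof. intros HK Hxy.
  destruct (classic (B x)) as [Bx|Bx]; destruct (classic (B y)) as [By|By].
  - destruct (diff_comp x y Bx By Hxy) as [[E1 E2]|E].
    + rewrite !shrink_slope_in by auto. unfold mid_third. rewrite E1, E2. apply max_min_mono; nra.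
    + pose proof (shrink_slope_range K x HK Bx). pose proof (shrink_slope_range K y HK By). lra.
  - rewrite (shrink_slope_out K y By). pose proof (shrink_slope_range K x HK Bx).
    destruct (notB_side x y Bx By).
    + pose proof (comp_lo_lt x Bx). lra.
    + lra.
  - rewrite (shrink_slope_out K x Bx). pose proof (shrink_slope_range K y HK By).
    destruct (notB_side y x By Bx).
    + lra.
    + pose proof (comp_hi_gt y By). lra.
  - rewrite !shrink_slope_out by auto. auto.
Qed.

Lemma shrink_mono x y : B x -> B y -> x < y -> shrink x < shrink y.
Proof. intros Bx By Hxy. rewrite !shrink_in by auto.
  destruct (diff_comp x y Bx By Hxy) as [[E1 E2]|E].
  - unfold mid_third. rewrite E1, E2. lra.
  - pose proof (mid_third_range x Bx). pose proof (mid_third_range y By). pose proof (comp_lo_lt x Bx).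
    pose proof (comp_hi_gt y By). lra.
Qed.

Lemma shrink_slope_mid_third K x : B x -> (comp_hi x - comp_lo x) <= K * Rmin (x - comp_lo x) (comp_hi x - x) ->
  shrink_slope K x = mid_third x.
Proof. intros Hx HK. rewrite shrink_slope_in by auto. pose proof (mid_third_range x Hx).
  pose proof (Rmin_l (x - comp_lo x) (comp_hi x - x)). pose proof (Rmin_r (x - comp_lo x) (comp_hi x - x)).
  pose proof (comp_lo_lt x Hx). pose proof (comp_hi_gt x Hx).
  assert (0 <= K). { destruct (Rle_dec 0 K); auto. exfalso.
    assert (0 < Rmin (x - comp_lo x) (comp_hi x - x)) by (apply Rmin_pos; lra). nra. }
  assert (K * Rmin (x - comp_lo x) (comp_hi x - x) <= K * (x - comp_lo x)) by (apply Rmult_le_compat_l; lra).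
  assert (K * Rmin (x - comp_lo x) (comp_hi x - x) <= K * (comp_hi x - x)) by (apply Rmult_le_compat_l; lra).
  unfold Rmax, Rmin. repeat destruct Rle_dec; lra. Qed.

Lemma shrink_slope_1 x : shrink_slope 1 x = x.
Proof. destruct (classic (B x)) as [Bx|Bx].
  - rewrite shrink_slope_in by auto. pose proof (mid_third_range x Bx). pose proof (comp_lo_lt x Bx).
    pose proof (comp_hi_gt x Bx).
    unfold Rmax, Rmin. repeat destruct Rle_dec; lra.
  - apply shrink_slope_out; auto.
Qed.

Lemma shrink_slope_big K x : 2 <= Rabs x -> shrink_slope K x = x.
Proof. intros. apply shrink_slope_out. apply HB2. auto. Qed.

Lemma shrink_slope_near_out K x c : 1 <= K -> ~ B c -> Rabs (shrink_slope K x - c) <= K * Rabs (x - c).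
Proof. intros HK Hc. destruct (classic (B x)) as [Bx|Bx].
  - pose proof (shrink_slope_range K x HK Bx). pose proof (comp_lo_lt x Bx). pose proof (comp_hi_gt x Bx).
    destruct (notB_side x c Bx Hc) as [Hc'|Hc'].
    + assert (shrink_slope K x <= comp_lo x + K * (x - comp_lo x)).
      { rewrite shrink_slope_in by auto.
          assert (comp_hi x - K * (comp_hi x - x) <= comp_lo x + K * (x - comp_lo x)) by nra.
        unfold Rmax, Rmin. repeat destruct Rle_dec; lra. }
      assert (comp_lo x + K * (x - comp_lo x) <= c + K * (x - c)) by nra.
      rewrite Rabs_right by lra. rewrite Rabs_right by lra. lra.
    + assert (comp_hi x - K * (comp_hi x - x) <= shrink_slope K x).
      { rewrite shrink_slope_in by auto. apply Rmax_r. }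
      assert (c - K * (c - x) <= comp_hi x - K * (comp_hi x - x)) by nra.
      rewrite Rabs_left by lra. rewrite Rabs_left by lra. lra.
  - rewrite shrink_slope_out by auto. pose proof (Rabs_pos (x - c)). nra.
Qed.

Lemma comp_lo_hi_bounds x : B x -> -2 <= comp_lo x /\ comp_hi x <= 2.
Proof. apply comp_bounds; auto. Qed.

Lemma B_lt2 x : B x -> -2 < x < 2.
Proof. intros Hx. assert (Rabs x < 2) by (destruct (Rlt_dec (Rabs x) 2); auto; exfalso; apply (HB2 x);
  auto; lra).
  apply Rabs_def2 in H. lra. Qed.

Lemma shrink_slope_continuous_in K0 x0 : 1 <= K0 -> B x0 -> forall e, 0 < e ->
  exists d, 0 < d /\ forall K x, 1 <= K ->
  Rabs (K - K0) < d -> Rabs (x - x0) < d -> Rabs (shrink_slope K x - shrink_slope K0 x0) < e.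
Proof. intros HK0 Bx0 e He.
  pose proof (comp_lo_lt x0 Bx0). pose proof (comp_hi_gt x0 Bx0). pose proof (comp_lo_hi_bounds x0 Bx0).
  pose proof (B_lt2 x0 Bx0).
  set (d0 := Rmin (x0 - comp_lo x0) (comp_hi x0 - x0)).
  assert (Hd0 : 0 < d0) by (apply Rmin_pos; lra).
  pose proof (Rmin_l (x0 - comp_lo x0) (comp_hi x0 - x0)).
  pose proof (Rmin_r (x0 - comp_lo x0) (comp_hi x0 - x0)).
  exists (Rmin (Rmin d0 1) (e / (2 * K0 + 11))). split.
  { repeat apply Rmin_pos; try lra. apply Rdiv_lt_0_compat; lra. }
  intros K x HK G1 G2.
  pose proof (Rmin_l (Rmin d0 1) (e / (2 * K0 + 11))). pose proof (Rmin_r (Rmin d0 1) (e / (2 * K0 + 11))).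
  pose proof (Rmin_l d0 1). pose proof (Rmin_r d0 1).
  set (dd := Rmin (Rmin d0 1) (e / (2 * K0 + 11))) in *.
  apply Rabs_def2 in G1. apply Rabs_def2 in G2.
  assert (Hx : comp_lo x0 < x < comp_hi x0) by (unfold d0 in *; lra).
  destruct (same_comp x0 x Bx0 Hx) as [E1 E2].
  assert (Bx : B x) by (apply (comp_mem B HB2 x0 x); auto).
  rewrite !shrink_slope_in by auto. unfold mid_third. rewrite E1, E2.
  eapply Rle_lt_trans. apply max_min_lipschitz.
  replace ((comp_lo x0 + comp_hi x0 + x) / 3 - (comp_lo x0 + comp_hi x0 + x0) / 3) with ((x - x0)/3) by field.
  replace (comp_lo x0 + K * (x - comp_lo x0) - (comp_lo x0 + K0 * (x0 - comp_lo x0))) with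
    (K * (x - x0) + (K - K0) * (x0 - comp_lo x0)) by ring.
  replace (comp_hi x0 - K * (comp_hi x0 - x) - (comp_hi x0 - K0 * (comp_hi x0 - x0))) with
    (K * (x - x0) - (K - K0) * (comp_hi x0 - x0)) by ring.
  assert (E3 : e / (2 * K0 + 11) * (2 * K0 + 11) = e) by (field; lra).
  assert (A1 : Rabs ((x - x0)/3) <= dd / 3).
  { unfold Rdiv. rewrite Rabs_mult. rewrite (Rabs_right (/3)) by lra. apply Rmult_le_compat_r. lra.
    apply Rabs_le. lra. }
  assert (A2 : Rabs (K * (x - x0) + (K - K0) * (x0 - comp_lo x0)) <= (K0 + 1) * dd + dd * 4).
  { eapply Rle_trans; [apply Rabs_triang|apply slope_perturbation_bound]; try apply Rabs_le; lra. }
  assert (A3 : Rabs (K * (x - x0) - (K - K0) * (comp_hi x0 - x0)) <= (K0 + 1) * dd + dd * 4).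
  { unfold Rminus at 1. eapply Rle_trans; [apply Rabs_triang|rewrite Rabs_Ropp; apply slope_perturbation_bound];
      try apply Rabs_le; lra. }
  assert (dd * (2 * K0 + 11) <= e).
  { rewrite <- E3. apply Rmult_le_compat_r; lra. }
  assert (0 < dd) by (unfold dd; repeat apply Rmin_pos; try lra; apply Rdiv_lt_0_compat; lra).
  nra.
Qed.

Lemma shrink_slope_continuous K0 x0 : 1 <= K0 -> forall e, 0 < e -> exists d, 0 < d /\ forall K x, 1 <= K ->
  Rabs (K - K0) < d -> Rabs (x - x0) < d -> Rabs (shrink_slope K x - shrink_slope K0 x0) < e.
Proof. intros HK0 e He. destruct (classic (B x0)) as [Bx0|Bx0].
  - apply shrink_slope_continuous_in; auto.
  - rewrite (shrink_slope_out K0 x0 Bx0).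
    exists (Rmin 1 (e / (K0 + 1))). split. { apply Rmin_pos. lra. apply Rdiv_lt_0_compat; lra. }
    intros K x HK H1 H2. pose proof (Rmin_l 1 (e / (K0 + 1))). pose proof (Rmin_r 1 (e / (K0 + 1))).
    eapply Rle_lt_trans. apply (shrink_slope_near_out K x x0 HK Bx0).
    apply Rabs_def2 in H1. pose proof (Rabs_pos (x - x0)).
    assert (K * Rabs (x - x0) <= (K0 + 1) * Rabs (x - x0)) by (apply Rmult_le_compat_r; lra).
    assert ((K0 + 1) * Rabs (x - x0) < (K0 + 1) * (e / (K0 + 1))) by (apply Rmult_lt_compat_l; lra).
    replace ((K0 + 1) * (e / (K0 + 1))) with e in * by (field; lra). lra.
Qed.
End Shrink.

Definition level_shrink (B : R -> Prop) (t0 : R) (w : R -> R) (x t : R) : R :=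
  if Req_EM_T t t0 then shrink B x else shrink_slope B (/ w t) x.

Section LevelShrink.
Variables (S : R*R -> Prop) (u v t0 : R) (w : R -> R).
Hypothesis Hs : is_strip S u v.
Hypothesis Ht0 : t0 = u \/ t0 = v.
Hypothesis Hb : forall x, S (x,t0) -> Rabs x < 2.
Hypothesis Hw1 : forall t, u <= t <= v -> t <> t0 -> 0 < w t <= 1.
Hypothesis Hwc : forall t, u <= t <= v -> forall e, 0 < e -> exists d, 0 < d /\
  forall t', u <= t' <= v -> Rabs (t' - t) < d -> Rabs (w t' - w t) < e.
Hypothesis Hw0 : w t0 = 0.

Let B := fun x => S (x,t0).
Lemma level_open1 : open1 B.
Proof. apply (strip_level_open1 S u v t0 Hs). Qed.
Lemma level_bounded : forall z, 2 <= Rabs z -> ~ B z.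
Proof. intros z Hz Bz. specialize (Hb z Bz). lra. Qed.

Lemma inv_weight_ge1 t : u <= t <= v -> t <> t0 -> 1 <= / w t.
Proof. intros H1 H2. destruct (Hw1 t H1 H2). rewrite <- Rinv_1. apply Rinv_le_contravar; lra. Qed.

Lemma inv_weight_continuous t : u <= t <= v -> t <> t0 -> forall e, 0 < e -> exists d, 0 < d /\
  forall t', u <= t' <= v -> Rabs (t' - t) < d -> t' <> t0 -> Rabs (/ w t' - / w t) < e.
Proof. intros H1 H2 e He. destruct (Hw1 t H1 H2) as [W1 W2].
  destruct (Hwc t H1 (Rmin (w t / 2) (e * (w t * w t) / 2))) as [d [Hd Hd']].
  { apply Rmin_pos. lra. apply Rdiv_lt_0_compat; [|lra]. apply Rmult_lt_0_compat; nra. }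
  exists d. split; auto. intros t' Ht' Htt Nt'.
  specialize (Hd' t' Ht' Htt). pose proof (Rmin_l (w t / 2) (e * (w t * w t) / 2)).
  pose proof (Rmin_r (w t / 2) (e * (w t * w t) / 2)).
  apply Rabs_def2 in Hd'.
  assert (Hw' : w t / 2 < w t') by lra.
  replace (/ w t' - / w t) with ((w t - w t') / (w t' * w t)) by (field; lra).
  unfold Rdiv. rewrite Rabs_mult. rewrite Rabs_inv by (apply Rgt_not_eq; apply Rmult_lt_0_compat; lra).
  rewrite (Rabs_right (w t' * w t)) by (left; apply Rmult_lt_0_compat; lra).
  apply (Rmult_lt_reg_r (w t' * w t)). apply Rmult_lt_0_compat; lra.
  rewrite Rmult_assoc, Rinv_l by (apply Rgt_not_eq; apply Rmult_lt_0_compat; lra). rewrite Rmult_1_r.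
  assert (Rabs (w t - w t') < e * (w t * w t) / 2) by (apply Rabs_def1; lra).
  assert (e * (w t * w t) / 2 < e * (w t' * w t)).
  { assert (w t * w t / 2 < w t' * w t) by nra. nra. }
  lra.
Qed.

(* Near the level [t0] the slope bound [/ w t'] is so large that [shrink_slope] coincides with
   [mid_third], which is affine of slope 1/3 on each component of [B]. *)
Lemma level_shrink_near_level x : B x ->
  exists d, 0 < d /\ forall x' t', S (x',t') -> Rabs (x' - x) < d -> Rabs (t' - t0) < d ->
    level_shrink B t0 w x' t' = mid_third B x + (x' - x) / 3.
Proof. intros Bx.
  pose proof (comp_lo_lt B level_open1 level_bounded x Bx).
  pose proof (comp_hi_gt B level_open1 level_bounded x Bx).
  set (a := comp_lo B x) in *. set (b := comp_hi B x) in *.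
  set (d0 := Rmin (x - a) (b - x)).
  assert (Hd0 : 0 < d0) by (apply Rmin_pos; lra).
  pose proof (Rmin_l (x - a) (b - x)). pose proof (Rmin_r (x - a) (b - x)).
  destruct (Hwc t0 ltac:(destruct Ht0; destruct Hs; lra) (d0 / (2 * (b - a)))) as [dw [Hdw Hdw']].
  { apply Rdiv_lt_0_compat; lra. }
  exists (Rmin (d0/2) dw). split. { apply Rmin_pos; lra. }
  intros x' t' Hx' E1 E2.
  pose proof (Rmin_l (d0/2) dw). pose proof (Rmin_r (d0/2) dw).
  apply Rabs_def2 in E1.
  assert (Hx'c : a < x' < b) by (unfold d0 in *; lra).
  destruct (same_comp B level_open1 level_bounded x x' Bx Hx'c) as [Ea Eb]. fold a b in Ea, Eb.
  assert (Bx' : B x') by (apply (comp_mem B level_bounded x x'); auto).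
  assert (Hmid : mid_third B x' = mid_third B x + (x' - x) / 3).
  { unfold mid_third. rewrite Ea, Eb. fold a b. field. }
  rewrite <- Hmid.
  unfold level_shrink. destruct (Req_EM_T t' t0) as [_|N]. apply shrink_in; auto.
  pose proof (strip_level_bounds S u v x' t' Hs Hx') as Ht'.
  specialize (Hdw' t' Ht' ltac:(lra)). rewrite Hw0 in Hdw'. rewrite Rminus_0_r in Hdw'.
  destruct (Hw1 t' Ht' N) as [W1 W2]. rewrite Rabs_right in Hdw' by lra.
  apply (shrink_slope_mid_third B level_open1 level_bounded); auto. rewrite Ea, Eb.
  assert (d0 / 2 <= Rmin (x' - a) (b - x')).
  { unfold Rmin at 1. destruct Rle_dec; unfold d0 in *; lra. }
  assert (HK : 2 * (b - a) / d0 < / w t').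
  { apply (Rmult_lt_reg_r (w t')). auto. rewrite Rinv_l by lra.
    apply (Rmult_lt_reg_r (d0 / (2 * (b - a)))). apply Rdiv_lt_0_compat; lra.
    replace (2 * (b - a) / d0 * w t' * (d0 / (2 * (b - a)))) with (w t') by (field; lra). lra. }
  assert (2 * (b - a) / d0 * (d0 / 2) = b - a) by (field; lra).
  assert (2 * (b - a) / d0 * (d0 / 2) <= / w t' * Rmin (x' - a) (b - x')).
  { apply Rmult_le_compat; try lra. apply Rlt_le, Rdiv_lt_0_compat; lra. }
  lra.
Qed.

Lemma level_shrink_continuous : continuous2_on S (level_shrink B t0 w).
Proof. intros x t Hx e He. pose proof (strip_level_bounds S u v x t Hs Hx) as Ht.
  destruct (Req_dec t t0) as [->|Nt].
  - destruct (level_shrink_near_level x Hx) as [d [Hd Hnear]].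
    exists (Rmin d (3 * e)). split. { apply Rmin_pos; lra. }
    intros x' t' Hx' E1 E2. pose proof (Rmin_l d (3 * e)). pose proof (Rmin_r d (3 * e)).
    rewrite (Hnear x' t'), (Hnear x t0); auto; try lra; try (apply Rabs_sub_diag_lt; lra).
    apply Rabs_def2 in E1. apply Rabs_def1; lra.
  - assert (HK0 := inv_weight_ge1 t Ht Nt).
    destruct (shrink_slope_continuous B level_open1 level_bounded (/ w t) x HK0 e He) as [d1 [Hd1 Hd1']].
    destruct (inv_weight_continuous t Ht Nt d1 Hd1) as [d2 [Hd2 Hd2']].
    assert (Hd3 : 0 < Rabs (t - t0)) by (apply Rabs_pos_lt; lra).
    exists (Rmin (Rmin d1 d2) (Rabs (t - t0))). split. { repeat apply Rmin_pos; lra. }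
    intros x' t' Hx' E1 E2.
    pose proof (Rmin_l (Rmin d1 d2) (Rabs (t - t0))). pose proof (Rmin_r (Rmin d1 d2) (Rabs (t - t0))).
    pose proof (Rmin_l d1 d2). pose proof (Rmin_r d1 d2).
    pose proof (strip_level_bounds S u v x' t' Hs Hx') as Ht'.
    assert (Nt' : t' <> t0).
    { intro E. subst t'. rewrite <- Rabs_Ropp in E2. replace (- (t0 - t)) with (t - t0) in E2 by ring. lra. }
    unfold level_shrink. destruct (Req_EM_T t' t0) as [E|_]; [contradiction|].
    destruct (Req_EM_T t t0) as [E|_]; [contradiction|].
    apply Hd1'. apply inv_weight_ge1; auto. apply Hd2'; auto; lra. lra.
Qed.

Lemma level_shrink_level_onto t y : u < t < v -> exists x, level_shrink B t0 w x t = y.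
Proof. intros Ht. unfold level_shrink. destruct (Req_EM_T t t0) as [E|N].
  { exfalso. destruct Ht0; lra. }
  assert (HK := inv_weight_ge1 t ltac:(lra) N).
  destruct (Rlt_dec (Rabs y) 2) as [Hy|Hy].
  - apply Rabs_def2 in Hy.
    destruct (IVT_interval (shrink_slope B (/ w t)) (-2) 2 y) as [z [_ Ez]].
    + lra.
    + intros x _ e He.
      destruct (shrink_slope_continuous B level_open1 level_bounded (/ w t) x HK e He) as [d [Hd Hd']].
      exists d. split; auto. intros x' _ Hx'. apply Hd'; auto. apply Rabs_sub_diag_lt; auto.
    + assert (shrink_slope B (/ w t) (-2) = -2) by
        (apply (shrink_slope_big B level_bounded); rewrite Rabs_left; lra).
      assert (shrink_slope B (/ w t) 2 = 2) by (apply (shrink_slope_big B level_bounded); rewrite Rabs_right;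
      lra). lra.
    + exists z; auto.
  - exists y. apply (shrink_slope_big B level_bounded). lra.
Qed.

Lemma level_shrink_homeo : level_homeo S u v (level_shrink B t0 w).
Proof. split; [exact Hs|split; [exact level_shrink_continuous|split]].
  - intros x y t Hx Hy Hxy. unfold level_shrink. destruct (Req_EM_T t t0) as [E|N].
    + subst. apply shrink_mono; auto. exact level_open1. exact level_bounded.
    + apply shrink_slope_mono; auto. exact level_open1. exact level_bounded. apply inv_weight_ge1; auto.
      eapply strip_level_bounds; eauto.
  - intros t Ht y. apply level_shrink_level_onto; auto.
Qed.

Lemma level_shrink_image_at y : level_image S (level_shrink B t0 w) (y, t0) <-> exists x, S (x,t0) /\
  mid_third B x = y.
Proof. unfold level_image, level_shrink. simpl. destruct (Req_EM_T t0 t0) as [_|N]; [|lra]. split.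
  - intros [x [Hx E]]. exists x. split; auto. rewrite <- E. symmetry. apply shrink_in. exact Hx.
  - intros [x [Hx E]]. exists x. split; auto. rewrite <- E. apply shrink_in. exact Hx.
Qed.

Lemma level_shrink_image_off t1 y : t1 <> t0 -> w t1 = 1 ->
  (level_image S (level_shrink B t0 w) (y, t1) <-> S (y,t1)).
Proof. intros N W. unfold level_image, level_shrink. simpl. destruct (Req_EM_T t1 t0) as [E|_];
  [contradiction|].
  rewrite W, Rinv_1. split.
  - intros [x [Hx E]]. rewrite shrink_slope_1 in E. subst. auto. exact level_open1. exact level_bounded.
  - intros Hy. exists y. split; auto. apply shrink_slope_1. exact level_open1. exact level_bounded.
Qed.
End LevelShrink.

Lemma shrunk_boundary_interval (T : R*R -> Prop) t0 (B : R -> Prop) J :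
  open1 B -> (forall z, 2 <= Rabs z -> ~ B z) ->
  (forall y, T (y,t0) <-> exists x, B x /\ mid_third B x = y) ->
  (exists I, (exists x, I x) /\ convex I /\ (forall x, I x -> T (x, t0)) /\
    (forall I', convex I' -> (forall x, I x -> I' x) -> (forall x, I' x -> T (x, t0)) ->
      forall x, I' x -> I x) /\
    (forall p, J p <-> (I (fst p) /\ snd p = t0))) ->
  exists x0, B x0 /\
    forall p, J p <-> (comp_lo B x0 + (comp_hi B x0 - comp_lo B x0)/3 < fst p <
                       comp_hi B x0 - (comp_hi B x0 - comp_lo B x0)/3 /\ snd p = t0).
Proof. intros HBo HB2 HT [I [[y0 Hy0] [C [IT [M HJ]]]]].
  destruct (proj1 (HT y0) (IT y0 Hy0)) as [x0 [Bx0 Ex0]].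
  exists x0. split; auto.
  set (a0 := comp_lo B x0) in *. set (b0 := comp_hi B x0) in *.
  pose proof (comp_lo_lt B HBo HB2 x0 Bx0). pose proof (comp_hi_gt B HBo HB2 x0 Bx0). fold a0 b0 in H, H0.
  set (Mi := fun y => a0 + (b0 - a0)/3 < y < b0 - (b0 - a0)/3).
  assert (HSH : forall y, T (y,t0) -> a0 < y < b0 -> Mi y).
  { intros y Hy Hyab. destruct (proj1 (HT y) Hy) as [x [Bx Ex]]. subst y.
    pose proof (comp_lo_lt B HBo HB2 x Bx). pose proof (comp_hi_gt B HBo HB2 x Bx).
    destruct (Rtotal_order x x0) as [Lt|[Eq|Gt]].
    - destruct (diff_comp B HBo HB2 x x0 Bx Bx0 Lt) as [[E1 E2]|E].
      + unfold Mi, mid_third. fold a0 b0 in E1, E2. rewrite <- E1, <- E2. split; lra.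
      + pose proof (mid_third_range B HBo HB2 x Bx). fold a0 in E. lra.
    - subst. apply (mid_third_range B HBo HB2 x0 Bx0).
    - destruct (diff_comp B HBo HB2 x0 x Bx0 Bx Gt) as [[E1 E2]|E].
      + unfold Mi, mid_third. fold a0 b0 in E1, E2. rewrite E1, E2. split; lra.
      + pose proof (mid_third_range B HBo HB2 x Bx). fold b0 in E. lra. }
  assert (HMT : forall y, Mi y -> T (y, t0)).
  { intros y Hy. apply HT. exists (3 * y - a0 - b0).
    assert (Hc : a0 < 3 * y - a0 - b0 < b0) by (unfold Mi in Hy; lra).
    split. apply (comp_mem B HB2 x0); auto.
    destruct (same_comp B HBo HB2 x0 _ Bx0 Hc) as [E1 E2]. unfold mid_third. rewrite E1, E2.
    fold a0 b0. field. }
  assert (Hy0M : Mi y0) by (rewrite <- Ex0; apply (mid_third_range B HBo HB2 x0 Bx0)).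
  assert (IM : forall y, I y -> Mi y).
  { intros y Hy. unfold Mi. split.
    - destruct (Rle_dec y (a0 + (b0 - a0)/3)) as [Le|Le]; [|lra]. exfalso.
      assert (I (a0 + (b0 - a0)/3)) by (apply (C y _ y0); auto; unfold Mi in Hy0M; lra).
      specialize (HSH _ (IT _ H1) ltac:(lra)). unfold Mi in HSH. lra.
    - destruct (Rle_dec (b0 - (b0 - a0)/3) y) as [Le|Le]; [|lra]. exfalso.
      assert (I (b0 - (b0 - a0)/3)) by (apply (C y0 _ y); auto; unfold Mi in Hy0M; lra).
      specialize (HSH _ (IT _ H1) ltac:(lra)). unfold Mi in HSH. lra. }
  assert (MI : forall y, Mi y -> I y).
  { intros y Hy. apply (M (fun z => I z \/ Mi z)); auto.
    - apply (convex_union I Mi y0); auto. intros p q r Hp Hr Hq. unfold Mi in *. lra.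
    - intros z [Hz|Hz]; auto. }
  intros p. rewrite HJ. split; intros [G1 G2]; split; auto. apply (IM _ G1).
Qed.


Lemma closure2_interval J lo hi t p : (forall p', J p' <-> (lo < fst p' < hi /\ snd p' = t)) ->
  closure2 J p -> lo <= fst p <= hi /\ snd p = t.
Proof. intros HJ Hc.
  assert (A : forall e, 0 < e -> lo - e < fst p < hi + e /\ Rabs (t - snd p) < e).
  { intros e He. destruct (Hc e He) as [p' [Hp' [E1 E2]]]. apply HJ in Hp'. destruct Hp' as [H1 H2].
    rewrite H2 in E2. apply Rabs_def2 in E1. split; auto. lra. }
  split; [split|].
  - destruct (Rle_dec lo (fst p)); auto. exfalso. destruct (A ((lo - fst p)/2) ltac:(lra)). lra.
  - destruct (Rle_dec (fst p) hi); auto. exfalso. destruct (A ((fst p - hi)/2) ltac:(lra)). lra.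
  - destruct (Req_dec (snd p) t); auto. exfalso.
    assert (0 < Rabs (t - snd p)) by (apply Rabs_pos_lt; lra).
    destruct (A (Rabs (t - snd p)) H0). lra.
Qed.

Lemma model_strip_of_shrunk_levels T u v : is_strip T u v ->
  (forall t0, t0 = u \/ t0 = v -> exists B, open1 B /\ (forall z, 2 <= Rabs z -> ~ B z) /\
     forall y, T (y,t0) <-> exists x, B x /\ mid_third B x = y) -> model_strip T u v.
Proof. intros Hs HL. split; auto. split.
  - intros J [t [I [Ht HI]]]. destruct (HL t Ht) as [B [HBo [HB2 HT]]].
    destruct (shrunk_boundary_interval T t B J HBo HB2 HT) as [x0 [Bx0 HJ]].
    { exists I. tauto. }
    exists 2. intros p Hp. apply HJ in Hp. pose proof (comp_lo_hi_bounds B HB2 x0 Bx0).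
    pose proof (comp_lo_lt B HBo HB2 x0 Bx0). pose proof (comp_hi_gt B HBo HB2 x0 Bx0).
    apply Rabs_le. lra.
  - intros J1 J2 [t1 [I1 [Ht1 HI1]]] [t2 [I2 [Ht2 HI2]]] N p [C1 C2].
    destruct (HL t1 Ht1) as [B [HBo [HB2 HT]]].
    destruct (shrunk_boundary_interval T t1 B J1 HBo HB2 HT) as [x1 [Bx1 HJ1]]. { exists I1. tauto. }
    destruct (closure2_interval _ _ _ _ p HJ1 C1) as [P1 Q1].
    destruct (HL t2 Ht2) as [B' [open1_opp [bounded_opp HT']]].
    destruct (shrunk_boundary_interval T t2 B' J2 open1_opp bounded_opp HT') as [x2' [_ HJ2']].
    { exists I2. tauto. }
    destruct (closure2_interval _ _ _ _ p HJ2' C2) as [_ Q2]. rewrite Q1 in Q2. subst t2.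
    destruct (shrunk_boundary_interval T t1 B J2 HBo HB2 HT) as [x2 [Bx2 HJ2]]. { exists I2. tauto. }
    destruct (closure2_interval _ _ _ _ p HJ2 C2) as [P2 _].
    pose proof (comp_lo_lt B HBo HB2 x1 Bx1). pose proof (comp_hi_gt B HBo HB2 x1 Bx1).
    pose proof (comp_lo_lt B HBo HB2 x2 Bx2). pose proof (comp_hi_gt B HBo HB2 x2 Bx2).
    destruct (Rtotal_order x1 x2) as [Lt|[Eq|Gt]].
    + destruct (diff_comp B HBo HB2 x1 x2 Bx1 Bx2 Lt) as [[E1 E2]|E].
      * apply N. intros q. rewrite HJ1, HJ2, E1, E2. tauto.
      * lra.
    + subst. apply N. intros q. rewrite HJ1, HJ2. tauto.
    + destruct (diff_comp B HBo HB2 x2 x1 Bx2 Bx1 Gt) as [[E1 E2]|E].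
      * apply N. intros q. rewrite HJ1, HJ2, E1, E2. tauto.
      * lra.
Qed.

(** * Compressing a strip into a model strip *)

Definition atan_shear (u v : R) (x t : R) : R := atan x + (t - u) * (v - t) * x.

Lemma atan_continuous x e : 0 < e -> exists d, 0 < d /\ forall x', Rabs (x' - x) < d ->
  Rabs (atan x' - atan x) < e.
Proof. intros He. pose proof (derivable_continuous_pt atan x (derivable_pt_atan x)) as H.
  destruct (H e He) as [d [Hd Hd']]. exists d. split; auto. intros x' Hx'.
  destruct (Req_dec x' x) as [->|N]. apply Rabs_sub_diag_lt; auto.
  apply (Hd' x'). split. split; auto. exact I. auto. Qed.

Lemma Rabs_atan_lt2 x : Rabs (atan x) < 2.
Proof. pose proof (atan_bound x). pose proof PI_4. apply Rabs_def1; lra. Qed.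

Lemma atan_shear_continuous S u v : is_strip S u v -> continuous2_on S (atan_shear u v).
Proof. intros Hs x t Hx e He. pose proof Hs as [Huv _].
  pose proof (strip_level_bounds S u v x t Hs Hx) as Ht.
  set (W := v - u).
  destruct (atan_continuous x (e/3) ltac:(lra)) as [d1 [Hd1 Hd1']].
  set (c1 := e / (3 * (W * W + 1))). set (c2 := e / (3 * (W * (Rabs x + 1) + 1))).
  assert (HW : 0 < W) by (unfold W; lra).
  pose proof (Rabs_pos x).
  assert (Hc1 : 0 < c1) by (unfold c1; apply Rdiv_lt_0_compat; nra).
  assert (Hc2 : 0 < c2) by (unfold c2; apply Rdiv_lt_0_compat; nra).
  exists (Rmin d1 (Rmin c1 c2)). split. { repeat apply Rmin_pos; auto. }
  intros x' t' Hx' E1 E2. pose proof (strip_level_bounds S u v x' t' Hs Hx') as Ht'.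
  pose proof (Rmin_l d1 (Rmin c1 c2)). pose proof (Rmin_r d1 (Rmin c1 c2)).
  pose proof (Rmin_l c1 c2). pose proof (Rmin_r c1 c2).
  specialize (Hd1' x' ltac:(lra)).
  unfold atan_shear.
  replace (atan x' + (t' - u) * (v - t') * x' - (atan x + (t - u) * (v - t) * x)) with
    ((atan x' - atan x) + (t' - u) * (v - t') * (x' - x) + ((t' - t) * (u + v - t - t')) * x) by ring.
  assert (M1 : 0 <= (t' - u) * (v - t') <= W * W) by (unfold W; split; nra).
  assert (M2 : Rabs (u + v - t - t') <= W) by (apply Rabs_le; unfold W; lra).
  assert (A2 : Rabs ((t' - u) * (v - t') * (x' - x)) <= W * W * Rabs (x' - x)).
  { rewrite Rabs_mult. rewrite (Rabs_right ((t' - u) * (v - t'))) by lra. apply Rmult_le_compat_r.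
      apply Rabs_pos. lra. }
  assert (A3 : Rabs ((t' - t) * (u + v - t - t') * x) <= Rabs (t' - t) * (W * Rabs x)).
  { rewrite !Rabs_mult. rewrite Rmult_assoc. apply Rmult_le_compat_l. apply Rabs_pos.
    apply Rmult_le_compat_r; auto. }
  assert (B2 : W * W * Rabs (x' - x) <= W * W * c1).
  { apply Rmult_le_compat_l. nra. lra. }
  assert (B3 : Rabs (t' - t) * (W * Rabs x) <= c2 * (W * Rabs x)).
  { apply Rmult_le_compat_r. nra. lra. }
  assert (C1 : W * W * c1 < e / 3).
  { unfold c1. apply (Rmult_lt_reg_r (3 * (W * W + 1))). nra.
    replace (W * W * (e / (3 * (W * W + 1))) * (3 * (W * W + 1))) with (W * W * e) by (field; nra).
    replace (e / 3 * (3 * (W * W + 1))) with (W * W * e + e) by field. lra. }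
  assert (C2 : c2 * (W * Rabs x) < e / 3).
  { unfold c2. apply (Rmult_lt_reg_r (3 * (W * (Rabs x + 1) + 1))). nra.
    replace (e / (3 * (W * (Rabs x + 1) + 1)) * (W * Rabs x) * (3 * (W * (Rabs x + 1) + 1))) with
      (W * Rabs x * e) by (field; nra).
    replace (e / 3 * (3 * (W * (Rabs x + 1) + 1))) with (W * Rabs x * e + W * e + e) by field. nra. }
  eapply Rle_lt_trans. apply Rabs_triang. eapply Rle_lt_trans. apply Rplus_le_compat_r. apply Rabs_triang.
  lra.
Qed.

Lemma atan_shear_level_onto u v t y : u < t < v -> exists x, atan_shear u v x t = y.
Proof. intros Ht. set (m := (t - u) * (v - t)).
  assert (Hm : 0 < m) by (unfold m; nra).
  set (hi := (Rabs y + 2) / m).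
  assert (Hhi : m * hi = Rabs y + 2) by (unfold hi; field; lra).
  assert (0 < hi) by (unfold hi; apply Rdiv_lt_0_compat; pose proof (Rabs_pos y); lra).
  pose proof (Rabs_atan_lt2 hi). pose proof (Rabs_atan_lt2 (- hi)). apply Rabs_def2 in H0.
  apply Rabs_def2 in H1.
  assert (- Rabs y <= y <= Rabs y) by (unfold Rabs; destruct Rcase_abs; lra).
  destruct (IVT_interval (fun x => atan_shear u v x t) (- hi) hi y) as [z [_ Ez]].
  - lra.
  - intros x _ e He. destruct (atan_continuous x (e/2) ltac:(lra)) as [d [Hd Hd']].
    exists (Rmin d (e / (2 * (m + 1)))). split. { apply Rmin_pos; auto. apply Rdiv_lt_0_compat; lra. }
    intros x' _ Hx'. pose proof (Rmin_l d (e / (2 * (m + 1)))). pose proof (Rmin_r d (e / (2 * (m + 1)))).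
    specialize (Hd' x' ltac:(lra)). unfold atan_shear. fold m.
    replace (atan x' + m * x' - (atan x + m * x)) with ((atan x' - atan x) + m * (x' - x)) by ring.
    eapply Rle_lt_trans. apply Rabs_triang. rewrite Rabs_mult. rewrite (Rabs_right m) by lra.
    assert (m * Rabs (x' - x) <= m * (e / (2 * (m + 1)))) by (apply Rmult_le_compat_l; lra).
    assert (m * (e / (2 * (m + 1))) < e / 2).
    { apply (Rmult_lt_reg_r (2 * (m + 1))). lra.
      replace (m * (e / (2 * (m + 1))) * (2 * (m + 1))) with (m * e) by (field; lra). nra. }
    lra.
  - unfold atan_shear. fold m. replace (m * - hi) with (- (Rabs y + 2)) by lra. split; lra.
  - exists z. exact Ez.
Qed.

Lemma atan_shear_homeo S u v : is_strip S u v -> level_homeo S u v (atan_shear u v).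
Proof. intros Hs. split; [auto|split; [apply atan_shear_continuous; auto|split]].
  - intros x y t Hx Hy Hxy. pose proof (strip_level_bounds S u v x t Hs Hx). unfold atan_shear.
    pose proof (atan_increasing x y Hxy). assert (0 <= (t - u) * (v - t)) by nra. nra.
  - intros t Ht y. apply atan_shear_level_onto; auto.
Qed.

Lemma atan_shear_boundary S u v y t : is_strip S u v -> (t = u \/ t = v) ->
  level_image S (atan_shear u v) (y, t) -> Rabs y < 2.
Proof. intros Hs Ht [x [Hx E]]. simpl in *. unfold atan_shear in E.
  replace ((t - u) * (v - t) * x) with 0 in E by (destruct Ht; subst; ring). rewrite Rplus_0_r in E.
  subst. apply Rabs_atan_lt2. Qed.

Lemma rel_height_continuous u v : u < v -> forall t e, 0 < e -> exists d, 0 < d /\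
  forall t', u <= t' <= v -> Rabs (t' - t) < d -> Rabs (rel_height u v t' - rel_height u v t) < e.
Proof. intros Huv t e He. exists (e * (v - u)). split. nra. intros t' _ H.
  rewrite rel_height_dist by auto. apply (Rmult_lt_reg_r (v - u)). lra. unfold Rdiv.
  rewrite Rmult_assoc, Rinv_l by lra. lra. Qed.

Lemma rel_height_compl_continuous u v : u < v -> forall t e, 0 < e -> exists d, 0 < d /\
  forall t', u <= t' <= v -> Rabs (t' - t) < d -> Rabs ((1 - rel_height u v t') - (1 - rel_height u v t)) < e.
Proof. intros Huv t e He. destruct (rel_height_continuous u v Huv t e He) as [d [Hd H]]. exists d. split; auto.
  intros t' Ht' Htt.
  replace (1 - rel_height u v t' - (1 - rel_height u v t)) with (- (rel_height u v t' - rel_height u v t)) by ring.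
  rewrite Rabs_Ropp. auto. Qed.

Lemma rel_height_pos u v t : u < v -> u <= t <= v -> t <> u -> 0 < rel_height u v t <= 1.
Proof. intros H1 H2 H3. pose proof (rel_height_range u v t H1 H2). split; [|lra].
  unfold rel_height. apply Rdiv_lt_0_compat; lra. Qed.
Lemma rel_height_compl_pos u v t : u < v -> u <= t <= v -> t <> v -> 0 < 1 - rel_height u v t <= 1.
Proof. intros H1 H2 H3. pose proof (rel_height_range u v t H1 H2). split; [|lra].
  assert (rel_height u v t < 1). { unfold rel_height. apply (Rmult_lt_reg_r (v - u)). lra. unfold Rdiv.
    rewrite Rmult_assoc, Rinv_l by lra. lra. }
  lra. Qed.

Lemma compress_to_model_strip S u v : is_strip S u v -> exists Phi, level_homeo S u v Phi /\
  model_strip (level_image S Phi) u v.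
Proof. intros Hs. pose proof Hs as [Huv _].
  pose proof (atan_shear_homeo S u v Hs) as GA. set (SA := level_image S (atan_shear u v)).
  assert (HsA : is_strip SA u v) by (apply level_image_strip; auto).
  (* Shrink the components of the level [u], then those of the level [v]; the weight of the
     second shrink is [1] on the level [u], where it is therefore the identity. *)
  set (Bu := fun x => SA (x,u)).
  assert (G1 : level_homeo SA u v (level_shrink Bu u (rel_height u v))).
  { apply level_shrink_homeo; auto.
    - intros x Hx. apply (atan_shear_boundary S u v x u Hs); auto.
    - intros t Ht N. apply rel_height_pos; auto.
    - intros t _ e He. apply rel_height_continuous; auto.
    - apply rel_height_lo; auto. }
  set (S1 := level_image SA (level_shrink Bu u (rel_height u v))).
  assert (Hs1 : is_strip S1 u v) by (apply level_image_strip; auto).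
  assert (E1v : forall y, S1 (y,v) <-> SA (y,v)).
  { intros y. apply (level_shrink_image_off SA u v u (rel_height u v) HsA).
    intros x Hx. apply (atan_shear_boundary S u v x u Hs); auto. lra.
    apply rel_height_hi; auto. }
  assert (E1u : forall y, S1 (y,u) <-> exists x, Bu x /\ mid_third Bu x = y).
  { intros y. apply (level_shrink_image_at SA u (rel_height u v)). }
  set (Bv := fun x => S1 (x,v)).
  assert (G2 : level_homeo S1 u v (level_shrink Bv v (fun t => 1 - rel_height u v t))).
  { apply level_shrink_homeo; auto.
    - intros x Hx. apply E1v in Hx. apply (atan_shear_boundary S u v x v Hs); auto.
    - intros t Ht N. apply rel_height_compl_pos; auto.
    - intros t _ e He. apply rel_height_compl_continuous; auto.
    - rewrite rel_height_hi; auto; ring. }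
  set (S2 := level_image S1 (level_shrink Bv v (fun t => 1 - rel_height u v t))).
  exists (level_comp (level_comp (atan_shear u v) (level_shrink Bu u (rel_height u v)))
    (level_shrink Bv v (fun t => 1 - rel_height u v t))).
  split.
  - apply level_homeo_comp. apply level_homeo_comp; auto. rewrite level_image_comp. auto.
  - rewrite level_image_comp. rewrite level_image_comp. fold SA S1 S2.
    apply model_strip_of_shrunk_levels. apply level_image_strip; auto.
    intros t0 [-> | ->].
    + exists Bu. split; [apply (strip_level_open1 SA u v u HsA)|]. split.
      { intros z Hz Bz. pose proof (atan_shear_boundary S u v z u Hs (or_introl eq_refl) Bz). lra. }
      intros y. unfold S2. transitivity (S1 (y,u)); [|apply E1u].
      apply (level_shrink_image_off S1 u v v (fun t => 1 - rel_height u v t) Hs1).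
      * intros x Hx. apply E1v in Hx. apply (atan_shear_boundary S u v x v Hs); auto.
      * lra.
      * rewrite rel_height_lo; auto; ring.
    + exists Bv. split; [apply (strip_level_open1 S1 u v v Hs1)|]. split.
      { intros z Hz Bz. apply E1v in Bz.
        pose proof (atan_shear_boundary S u v z v Hs (or_intror eq_refl) Bz). lra. }
      intros y. unfold S2. apply (level_shrink_image_at S1 v (fun t => 1 - rel_height u v t)).
Qed.

Lemma compress_family {L : Type} (S : L -> R*R -> Prop) u v : (forall l, is_strip (S l) (u l) (v l)) ->
  exists Phi : L -> R -> R -> R, forall l,
    level_homeo (S l) (u l) (v l) (Phi l) /\ model_strip (level_image (S l) (Phi l)) (u l) (v l).
Proof. intros Hs.
  apply (choice (fun l F => level_homeo (S l) (u l) (v l) F /\ model_strip (level_image (S l) F) (u l) (v l))).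
  intros l. apply compress_to_model_strip, Hs.
Qed.

Lemma image_strips_comp {L : Type} (S : L -> R*R -> Prop) Phi1 Phi2 :
  image_strips S (fun l => level_comp (Phi1 l) (Phi2 l)) = image_strips (image_strips S Phi1) Phi2.
Proof. apply functional_extensionality. intro l. apply level_image_comp. Qed.

Lemma image_strips_inv {L : Type} (S : L -> R*R ->
  Prop) u v Phi : (forall l, level_homeo (S l) (u l) (v l) (Phi l)) ->
  image_strips (image_strips S Phi) (fun l => level_inv (S l) (Phi l)) = S.
Proof. intros HG. apply functional_extensionality. intro l. unfold image_strips.
  apply (level_image_inv (S l) (u l) (v l)). auto. Qed.

Lemma strips_map_inv_homeo {L : Type} (S : L -> R*R -> Prop) u v Phi :
  (forall l, level_homeo (S l) (u l) (v l) (Phi l)) ->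
  homeo_on opnP (S0 (image_strips S Phi)) opnP (S0 S) (strips_map_inv S Phi) /\
  maps_leaves (S0_leaf (image_strips S Phi) u v) (S0_leaf S u v) (strips_map_inv S Phi).
Proof. intros HG.
  assert (HG' : forall l, level_homeo (image_strips S Phi l) (u l) (v l) (level_inv (S l) (Phi l)))
    by (intros l; apply level_inv_homeo; auto).
  pose proof (strips_map_homeo _ u v _ HG') as Hhomeo. pose proof (strips_map_leaves _ u v _ HG') as Hleaves.
  rewrite (image_strips_inv S u v Phi HG) in Hhomeo, Hleaves. split; assumption.
Qed.

Lemma S0_leaf_sub {L : Type} (S : L -> R*R -> Prop) u v Lf x : (forall l, is_strip (S l) (u l) (v l)) ->
  S0_leaf S u v Lf -> Lf x -> S0 S x.
Proof. intros Hs [l [L0 [HL HLf]]] Hx. apply HLf in Hx. destruct Hx as [E Hx]. unfold S0. rewrite E.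
  destruct HL as [[t [Ht HL0]]|Hb].
  - destruct (snd x) as [y s] eqn:Es. apply HL0 in Hx. simpl in Hx. subst s. apply (Hs l). auto.
  - eapply boundary_interval_sub; eauto.
Qed.

Lemma homeo_on_id {Z : Type} (opnZ : (Z -> Prop) ->
  Prop) : homeo_on opnZ (fun _ => True) opnZ (fun _ => True) (fun z => z).
Proof. exists (fun z => z). split; [|split; [|split]].
  - split; auto. intros V HV. exists V. split; auto. tauto.
  - split; auto. intros V HV. exists V. split; auto. tauto.
  - auto.
  - auto.
Qed.

Lemma atlas_equiv_of_strips_homeo {L Z : Type} (opnZ : (Z -> Prop) -> Prop) (S S' : L -> R*R -> Prop)
  (u v : L -> R) (q q' : L * (R*R) -> Z) (h : L * (R*R) -> L * (R*R)) :
  (forall l, is_strip (S l) (u l) (v l)) ->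
  homeo_on opnP (S0 S) opnP (S0 S') h -> maps_leaves (S0_leaf S u v) (S0_leaf S' u v) h ->
  (forall x, S0 S x -> q' (h x) = q x) ->
  atlas_equiv opnZ S u v q opnZ S' u v q'.
Proof. intros Hs Hh Hleaves Hq.
  exists h, (fun z => z). split; [auto|split; [auto|split; [apply homeo_on_id|split; [|auto]]]].
  intros K [Lf [HLf HK]]. exists (image h Lf). split; [apply Hleaves; auto|].
  intros z. split.
  - intros [z' [Hz' <-]]. apply HK in Hz'. destruct Hz' as [x [Hx <-]].
    exists (h x). split. exists x; auto. apply Hq. eapply S0_leaf_sub; eauto.
  - intros [y [[x [Hx <-]] <-]]. exists (q x). split. apply HK. exists x; auto.
    symmetry. apply Hq. eapply S0_leaf_sub; eauto.
Qed.

Lemma affine_atlas_equivalent {L Z G : Type} (opnZ : (Z -> Prop) -> Prop) (S : L -> R*R -> Prop)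
  (u v : L -> R) (q : L * (R*R) -> Z) (X Y : G -> L * (R*R -> Prop)) :
  striped_atlas_fam opnZ S u v q X Y ->
  exists (S' : L -> R*R -> Prop) (q' : L * (R*R) -> Z),
    affine_atlas opnZ S' u v q' /\ atlas_equiv opnZ S u v q opnZ S' u v q'.
Proof. intros Hfam.
  assert (Hstr : forall l, is_strip (S l) (u l) (v l)) by apply Hfam.
  destruct (compress_family S u v Hstr) as [Phi1 HPhi1].
  assert (G1 : forall l, level_homeo (S l) (u l) (v l) (Phi1 l)) by apply HPhi1.
  set (S1 := image_strips S Phi1). set (q1 := fun y => q (strips_map_inv S Phi1 y)).
  pose proof (striped_atlas_transport S u v Phi1 G1 opnZ G q X Y Hfam) as Hfam1.
  destruct (affinization opnZ S1 u v q1 _ _ Hfam1 (fun l => proj2 (HPhi1 l))) as [G2 [E2 Aff]].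
  set (Phi2 := affinizer u v q1 _ _) in *.
  set (Phi := fun l => level_comp (Phi1 l) (Phi2 l)).
  assert (GPhi : forall l, level_homeo (S l) (u l) (v l) (Phi l)) by
    (intros l; apply level_homeo_comp; [apply G1|apply G2]).
  assert (E : image_strips S Phi = S1) by (unfold Phi; rewrite image_strips_comp; exact E2).
  exists S1, (fun y => q1 (strips_map_inv S1 Phi2 y)). split; [exact Aff|].
  apply atlas_equiv_of_strips_homeo with (h := strips_map Phi); auto; rewrite <- E.
  - apply (strips_map_homeo S u v); auto.
  - apply (strips_map_leaves S u v); auto.
  - intros x Hx. rewrite E. unfold q1. change (strips_map Phi x) with (strips_map Phi2 (strips_map Phi1 x)).
    rewrite (strips_mapK S1 u v Phi2 G2), (strips_mapK S u v Phi1 G1); auto.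
    apply (strips_map_in S u v Phi1 G1); auto.
Qed.

Lemma affine_reparametrization {L Z G : Type} (opnZ : (Z -> Prop) -> Prop) (S : L -> R*R -> Prop)
  (u v : L -> R) (q : L * (R*R) -> Z) (X Y : G -> L * (R*R -> Prop)) :
  striped_atlas_fam opnZ S u v q X Y -> (forall l, model_strip (S l) (u l) (v l)) ->
  exists h : L * (R*R) -> L * (R*R),
    homeo_on opnP (S0 S) opnP (S0 S) h /\ maps_leaves (S0_leaf S u v) (S0_leaf S u v) h /\
    affine_atlas opnZ S u v (fun x => q (h x)).
Proof. intros Hfam Hmod. destruct (affinization opnZ S u v q X Y Hfam Hmod) as [G2 [E2 Aff]].
  destruct (strips_map_inv_homeo S u v _ G2) as [Hhomeo Hleaves]. rewrite E2 in Hhomeo, Hleaves.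
  exists (strips_map_inv S (affinizer u v q X Y)). auto.
Qed.

Theorem mainTheorem6 :
  forall (L Z : Type) (opnZ : (Z -> Prop) -> Prop) (S : L -> R * R -> Prop)
         (u v : L -> R) (q : L * (R * R) -> Z),
    is_topology opnZ -> surface2 opnZ -> striped_atlas opnZ S u v q ->
    (exists (L' Z' : Type) (opnZ' : (Z' -> Prop) -> Prop) (S' : L' -> R * R -> Prop)
            (u' v' : L' -> R) (q' : L' * (R * R) -> Z'),
        is_topology opnZ' /\ surface2 opnZ' /\ affine_atlas opnZ' S' u' v' q' /\
        atlas_equiv opnZ S u v q opnZ' S' u' v' q') /\
    ((forall l, model_strip (S l) (u l) (v l)) ->
     exists h : L * (R * R) -> L * (R * R),
       homeo_on opnP (S0 S) opnP (S0 S) h /\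
       maps_leaves (S0_leaf S u v) (S0_leaf S u v) h /\
       affine_atlas opnZ S u v (fun x => q (h x))).
Proof.
  intros L Z opnZ S u v q Htop Hsurf [G [X [Y Hfam]]]. split.
  - destruct (affine_atlas_equivalent opnZ S u v q X Y Hfam) as [S' [q' [Haff Hequiv]]].
    exists L, Z, opnZ, S', u, v, q'. auto.
  - exact (affine_reparametrization opnZ S u v q X Y Hfam).
Qed.
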